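(* Let $f(z)=\sum_{k=0}^d\alpha_kz^k$ be a complex polynomial of degree $d\ge 2$, and consider $z'=f(z)$ as the real planar system $x'=P(x,y)$, $y'=Q(x,y)$ with $P=\operatorname{Re} f(x+iy)$, $Q=\operatorname{Im} f(x+iy)$. Let $p=(p_1,p_2)\in\mathbb{R}^2$, $\|p\|=1$, be a critical point at infinity, and let $\alpha\in\mathbb{R}$ be such that $(P_d(p_1,p_2),Q_d(p_1,p_2))^{\top}=\alpha\,(p_1,p_2)^{\top}$. Then $\alpha\neq 0$. Moreover, if $\alpha>0$ there is a solution $z^*$ of $z'=f(z)$ defined on a maximal interval $(t_{\min},t_{\max})$ with $t_{\max}<\infty$ that diverges to $p_\infty$ as $t\to t_{\max}^-$ (a positive separatrix ending at $p$); if $\alpha<0$ there is a solution with $t_{\min}>-\infty$ that diverges to $p_\infty$ as $t\to t_{\min}^+$ (a negative separatrix starting at $p$).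
   Context: $P_d,Q_d$ denote the homogeneous parts of degree $d$ of $P,Q$. A critical point at infinity is $p$ with $\|p\|=1$ and $p_1Q_d(p_1,p_2)-p_2P_d(p_1,p_2)=0$ (equivalently, $(P_d(p),Q_d(p))$ is a real multiple of $p$). A continuous curve $y(t)$ diverges to $p_\infty$ as $t\to t_{\max}^-$ if $\|y(t)\|\to\infty$ and $y(t)/\|y(t)\|\to p$. A trajectory $\gamma$ of $z'=f(z)$ is a positive (negative) separatrix if there is a point $z\in\gamma$ such that the maximal interval of existence of the solution starting at $z$ in positive (negative) time is finite. *)

From Stdlib Require Import Reals Lra.
Open Scope R_scope.

Definition Cx := (R * R)%type.
Definition cadd (z w : Cx) : Cx := (fst z + fst w, snd z + snd w).
Definition cmul (z w : Cx) : Cx :=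
  (fst z * fst w - snd z * snd w, fst z * snd w + snd z * fst w).
Fixpoint cpow (z : Cx) (n : nat) : Cx :=
  match n with O => (1, 0) | S m => cmul z (cpow z m) end.

Fixpoint cpoly (alpha : nat -> Cx) (d : nat) (z : Cx) : Cx :=
  match d with
  | O => alpha O
  | S m => cadd (cpoly alpha m z) (cmul (alpha (S m)) (cpow z (S m)))
  end.

Definition Pf (alpha : nat -> Cx) (d : nat) (x y : R) : R := fst (cpoly alpha d (x, y)).
Definition Qf (alpha : nat -> Cx) (d : nat) (x y : R) : R := snd (cpoly alpha d (x, y)).

(* Homogeneous parts of degree d of P and Q: the only degree-d contribution
   of f(x+iy) comes from alpha_d (x+iy)^d (the other terms have total degree < d). *)
Definition Pd (alpha : nat -> Cx) (d : nat) (x y : R) : R := fst (cmul (alpha d) (cpow (x, y) d)).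
Definition Qd (alpha : nat -> Cx) (d : nat) (x y : R) : R := snd (cmul (alpha d) (cpow (x, y) d)).

Definition cnorm (z : Cx) : R := sqrt (fst z ^ 2 + snd z ^ 2).

(* open intervals (lo, hi) with lo = None meaning -oo, hi = None meaning +oo *)
Definition in_int (lo hi : option R) (t : R) : Prop :=
  match lo with None => True | Some a => a < t end /\
  match hi with None => True | Some b => t < b end.

Definition is_solution (F : Cx -> Cx) (lo hi : option R) (z : R -> Cx) : Prop :=
  (exists t, in_int lo hi t) /\
  forall t, in_int lo hi t ->
    derivable_pt_lim (fun s => fst (z s)) t (fst (F (z t))) /\
    derivable_pt_lim (fun s => snd (z s)) t (snd (F (z t))).

Definition maximal_solution (F : Cx -> Cx) (lo hi : option R) (z : R -> Cx) : Prop :=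
  is_solution F lo hi z /\
  forall lo' hi' (w : R -> Cx),
    is_solution F lo' hi' w ->
    (forall t, in_int lo hi t -> in_int lo' hi' t) ->
    (forall t, in_int lo hi t -> w t = z t) ->
    (forall t, in_int lo' hi' t -> in_int lo hi t).

Definition diverges_left_of (lo : option R) (tmax : R) (z : R -> Cx) (p : Cx) : Prop :=
  (forall M, exists delta, delta > 0 /\
     forall t, in_int lo (Some tmax) t -> tmax - delta < t -> cnorm (z t) > M) /\
  (forall eps, eps > 0 -> exists delta, delta > 0 /\
     forall t, in_int lo (Some tmax) t -> tmax - delta < t ->
       cnorm (fst (z t) / cnorm (z t) - fst p, snd (z t) / cnorm (z t) - snd p) < eps).

Definition diverges_right_of (tmin : R) (hi : option R) (z : R -> Cx) (p : Cx) : Prop :=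
  (forall M, exists delta, delta > 0 /\
     forall t, in_int (Some tmin) hi t -> t < tmin + delta -> cnorm (z t) > M) /\
  (forall eps, eps > 0 -> exists delta, delta > 0 /\
     forall t, in_int (Some tmin) hi t -> t < tmin + delta ->
       cnorm (fst (z t) / cnorm (z t) - fst p, snd (z t) / cnorm (z t) - snd p) < eps).

(* Write d = m + 2 and P = (p1, p2), so that alpha_d P^d = a P. For a > 0 we look for a solution
   z(t) = P (1 + u(s)) / s with s = ((m + 1) a (-t))^(1/(m+1)), which runs off to infinity in the
   direction P as t -> 0^-. In these variables z' = f(z) becomes s u' + (m + 1) u = G(s, u), where the
   linear part of the leading term has been absorbed on the left, so that near u = 0 the map G is a
   contraction in u, Lipschitz in s, and G(0, 0) = 0. The solutions that are regular at s = 0 are the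
   fixed points of u |-> (s |-> int_0^1 r^m G(s r, u(s r)) dr), found by Picard iteration; they satisfy
   u(s) = O(s), whence |z| -> oo and z/|z| -> P. By uniqueness for the locally Lipschitz field f this
   solution has a maximal extension to the left, whose right end stays at 0 since z is unbounded there.
   For a < 0, reversing time replaces f by -f and a by -a. Finally a = 0 would force alpha_d = 0 since
   |P| = 1. *)

From Pilot Require Import Defs.
From Stdlib Require Import Reals Lra Lia Psatz Classical ClassicalEpsilon FunctionalExtensionality.
From Coquelicot Require Import Coquelicot.
(* [Reals] has its own [in_int]; re-importing [Defs] makes [in_int] refer to [Defs.in_int]. *)
Import Defs.
Open Scope R_scope.

Lemma Csub_0_r (z : C) : (z - RtoC 0)%C = z.
Proof. ring. Qed.

Lemma Csub_0_l (z : C) : (RtoC 0 - z)%C = (- z)%C.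
Proof. ring. Qed.

Lemma Cmult_sub_distr_l (x y z : C) : (x * (y - z))%C = (x * y - x * z)%C.
Proof. ring. Qed.

Lemma Cmult_eq_inv_l (k q r : C) : k <> 0%C -> (k * q)%C = r -> q = (/ k * r)%C.
Proof. intros Hk <-. field. exact Hk. Qed.

Lemma Cmod_fst_le (z : C) : Rabs (fst z) <= Cmod z.
Proof. eapply Rle_trans; [apply Rmax_l | apply Rmax_Cmod]. Qed.

Lemma Cmod_snd_le (z : C) : Rabs (snd z) <= Cmod z.
Proof. eapply Rle_trans; [apply Rmax_r | apply Rmax_Cmod]. Qed.

Lemma Cmod_le_abs_sum (z : C) : Cmod z <= Rabs (fst z) + Rabs (snd z).
Proof.
  destruct z as [x y]; unfold Cmod; simpl.
  pose proof (Rabs_pos x); pose proof (Rabs_pos y).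
  rewrite <- (sqrt_Rsqr (Rabs x + Rabs y)) by lra.
  apply sqrt_le_1_alt; unfold Rsqr.
  pose proof (Rsqr_abs x); pose proof (Rsqr_abs y); unfold Rsqr in *; nra.
Qed.

Lemma Cmod_sub_sym (x y : C) : Cmod (x - y) = Cmod (y - x).
Proof. replace (x - y)%C with (- (y - x))%C by ring. apply Cmod_opp. Qed.

Lemma Cmod_sub_triangle (x y z : C) : Cmod (x - z) <= Cmod (x - y) + Cmod (y - z).
Proof. replace (x - z)%C with ((x - y) + (y - z))%C by ring. apply Cmod_triangle. Qed.

Lemma Cmod_sub_rev (u v : C) : Rabs (Cmod u - Cmod v) <= Cmod (u - v).
Proof.
  assert (Cmod u <= Cmod (u - v) + Cmod v)
    by (replace u with ((u - v) + v)%C at 1 by ring; apply Cmod_triangle).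
  assert (Cmod v <= Cmod (u - v) + Cmod u)
    by (rewrite Cmod_sub_sym; replace v with ((v - u) + u)%C at 1 by ring; apply Cmod_triangle).
  unfold Rabs; destruct Rcase_abs; lra.
Qed.

Lemma Cmod_RtoC_mult (r : R) (z : C) : Cmod (RtoC r * z) = Rabs r * Cmod z.
Proof. now rewrite Cmod_mult, Cmod_R. Qed.

Lemma Cmod_unit_mult (P z : C) : Cmod P = 1 -> Cmod (P * z) = Cmod z.
Proof. intros HP. rewrite Cmod_mult, HP. ring. Qed.

Lemma Cmod_sq (z : C) : Cmod z ^ 2 = fst z ^ 2 + snd z ^ 2.
Proof. unfold Cmod. rewrite pow2_sqrt; [reflexivity | nra]. Qed.

Lemma Cmod_pow_le (x : C) (X : R) (k : nat) : Cmod x <= X -> Cmod (x ^ k) <= X ^ k.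
Proof. intros H. rewrite Cmod_pow. apply pow_incr. split; [apply Cmod_ge_0 | exact H]. Qed.

Lemma C_pair_eq (z w : C) : fst z = fst w -> snd z = snd w -> z = w.
Proof. destruct z, w; simpl; intros -> ->; reflexivity. Qed.

Lemma Cpow_lipschitz (k : nat) (X : R) : 0 <= X -> exists L, 0 <= L /\
  forall x x' : C, Cmod x <= X -> Cmod x' <= X -> Cmod (x ^ k - x' ^ k) <= L * Cmod (x - x').
Proof.
  intros HX. induction k as [|k [L [HL IH]]].
  - exists 0. split; [lra|]. intros x x' _ _. simpl.
    replace (_ - _)%C with (RtoC 0) by ring. rewrite Cmod_0. pose proof (Cmod_ge_0 (x - x')). lra.
  - exists (X * L + X ^ k). split; [pose proof (pow_le X k HX); nra|].
    intros x x' Hx Hx'. simpl.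
    replace (x * x ^ k - x' * x' ^ k)%C with (x * (x ^ k - x' ^ k) + (x - x') * x' ^ k)%C by ring.
    eapply Rle_trans; [apply Cmod_triangle|]. rewrite !Cmod_mult.
    pose proof (IH x x' Hx Hx'). pose proof (Cmod_pow_le x' X k Hx').
    pose proof (Cmod_ge_0 x). pose proof (Cmod_ge_0 (x - x')). pose proof (Cmod_ge_0 (x' ^ k)).
    assert (Cmod x * Cmod (x ^ k - x' ^ k) <= X * (L * Cmod (x - x')))
      by (apply Rmult_le_compat; auto; apply Cmod_ge_0).
    nra.
Qed.

Lemma Cmod_le_2_near_1 (y : C) (rho : R) : rho <= 1 -> Cmod (y - 1) <= rho -> Cmod y <= 2.
Proof.
  intros H1 H2. replace y with ((y - 1) + 1)%C by ring.
  eapply Rle_trans; [apply Cmod_triangle|]. rewrite Cmod_1. lra.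
Qed.

Lemma Cpow_near_1 (k : nat) : exists K, 0 <= K /\ forall (rho : R) (y : C),
  0 <= rho <= 1 -> Cmod (y - 1) <= rho -> Cmod (y ^ k - 1) <= K * rho.
Proof.
  induction k as [|k [K [HK IH]]].
  - exists 0. split; [lra|]. intros rho y _ _. simpl.
    replace (_ - _)%C with (RtoC 0) by ring. rewrite Cmod_0. lra.
  - exists (2 * K + 1). split; [lra|]. intros rho y Hr Hy. simpl.
    replace (y * y ^ k - 1)%C with (y * (y ^ k - 1) + (y - 1))%C by ring.
    eapply Rle_trans; [apply Cmod_triangle|]. rewrite Cmod_mult.
    pose proof (Cmod_le_2_near_1 y rho (proj2 Hr) Hy). pose proof (IH rho y Hr Hy).
    assert (Cmod y * Cmod (y ^ k - 1) <= 2 * (K * rho))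
      by (apply Rmult_le_compat; auto; apply Cmod_ge_0).
    nra.
Qed.

Lemma Cpow_linear_remainder_near_1 (k : nat) : exists K, 0 <= K /\ forall (rho : R) (y y' : C),
  0 <= rho <= 1 -> Cmod (y - 1) <= rho -> Cmod (y' - 1) <= rho ->
  Cmod (y ^ k - y' ^ k - RtoC (INR k) * (y - y')) <= K * rho * Cmod (y - y').
Proof.
  induction k as [|k [K [HK IH]]].
  - exists 0. split; [lra|]. intros rho y y' _ _ _. simpl.
    replace (1 - 1 - RtoC 0 * (y - y'))%C with (RtoC 0) by ring. rewrite Cmod_0. lra.
  - destruct (Cpow_near_1 k) as [K' [HK' Hpow]].
    exists (2 * K + INR k + K'). pose proof (pos_INR k). split; [lra|].
    intros rho y y' Hr Hy Hy'.
    replace (y ^ S k - y' ^ S k - RtoC (INR (S k)) * (y - y'))%C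
      with (y * (y ^ k - y' ^ k - RtoC (INR k) * (y - y'))
            + (y - y') * (RtoC (INR k) * (y - 1) + (y' ^ k - 1)))%C
      by (rewrite S_INR, RtoC_plus; simpl; ring).
    eapply Rle_trans; [apply Cmod_triangle|]. rewrite !Cmod_mult.
    pose proof (Cmod_le_2_near_1 y rho (proj2 Hr) Hy).
    pose proof (IH rho y y' Hr Hy Hy'). pose proof (Hpow rho y' Hr Hy').
    assert (Cmod (RtoC (INR k) * (y - 1) + (y' ^ k - 1)) <= INR k * rho + K' * rho).
    { eapply Rle_trans; [apply Cmod_triangle|]. rewrite Cmod_RtoC_mult, Rabs_right by lra.
      pose proof (Cmod_ge_0 (y - 1)). nra. }
    pose proof (Cmod_ge_0 (y - y')).
    assert (Cmod y * Cmod (y ^ k - y' ^ k - RtoC (INR k) * (y - y')) <= 2 * (K * rho * Cmod (y - y')))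
      by (apply Rmult_le_compat; auto; apply Cmod_ge_0).
    assert (Cmod (y - y') * Cmod (RtoC (INR k) * (y - 1) + (y' ^ k - 1))
            <= Cmod (y - y') * (INR k * rho + K' * rho)) by (apply Rmult_le_compat_l; auto).
    nra.
Qed.

Lemma cpoly_S (alpha : nat -> C) (m : nat) (z : C) :
  cpoly alpha (S m) z = (cpoly alpha m z + alpha (S m) * z ^ S m)%C.
Proof. reflexivity. Qed.

(* [scaled_cpoly b k s x = s ^ k * f (x / s)] for [f = cpoly b k], written so that it makes sense at
   [s = 0]. *)
Fixpoint scaled_cpoly (b : nat -> C) (k : nat) (s : R) (x : C) : C :=
  match k with
  | O => b O
  | S j => (RtoC s * scaled_cpoly b j s x + b (S j) * x ^ S j)%C
  end.

Lemma scaled_cpoly_spec (b : nat -> C) (k : nat) (s : R) (x : C) :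
  s <> 0 -> (RtoC (s ^ k) * cpoly b k (x / RtoC s))%C = scaled_cpoly b k s x.
Proof.
  intros Hs. assert (Hs' : RtoC s <> 0%C) by (intros E; apply Hs; now injection E).
  induction k as [|k IH]; [simpl; ring|].
  rewrite cpoly_S. cbn [scaled_cpoly]. rewrite <- IH.
  replace (RtoC (s ^ S k)) with (RtoC s * RtoC (s ^ k))%C by (simpl; now rewrite RtoC_mult).
  rewrite RtoC_pow. unfold Cdiv. rewrite Cpow_mult_l, Cpow_inv by auto.
  simpl Cpow. field. split; auto. now apply Cpow_nz.
Qed.

Lemma scaled_cpoly_1 (b : nat -> C) (k : nat) (x : C) : scaled_cpoly b k 1 x = cpoly b k x.
Proof. induction k as [|k IH]; [reflexivity|]. cbn [scaled_cpoly]. rewrite IH, cpoly_S. ring. Qed.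

Lemma scaled_cpoly_lipschitz (b : nat -> C) (k : nat) (X : R) : 0 <= X -> exists B L,
  0 <= B /\ 0 <= L /\ forall (s s' : R) (x x' : C),
  Rabs s <= 1 -> Rabs s' <= 1 -> Cmod x <= X -> Cmod x' <= X ->
  Cmod (scaled_cpoly b k s x) <= B /\
  Cmod (scaled_cpoly b k s x - scaled_cpoly b k s' x') <= L * (Rabs (s - s') + Cmod (x - x')).
Proof.
  intros HX. induction k as [|k [B [L [HB [HL IH]]]]].
  - exists (Cmod (b O)), 0. split; [apply Cmod_ge_0|]. split; [lra|].
    intros s s' x x' _ _ _ _. simpl. split; [lra|].
    replace (b O - b O)%C with (RtoC 0) by ring. rewrite Cmod_0.
    pose proof (Rabs_pos (s - s')). pose proof (Cmod_ge_0 (x - x')). lra.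
  - destruct (Cpow_lipschitz (S k) X HX) as [Lp [HLp Hpow]].
    set (c := b (S k)). pose proof (Cmod_ge_0 c). pose proof (pow_le X (S k) HX).
    exists (B + Cmod c * X ^ S k), (B + L + Cmod c * Lp).
    split; [nra|]. split; [nra|].
    intros s s' x x' Hs Hs' Hx Hx'. destruct (IH s s' x x' Hs Hs' Hx Hx') as [IH1 IH2].
    pose proof (Cmod_pow_le x X (S k) Hx). pose proof (Hpow x x' Hx Hx').
    pose proof (Cmod_ge_0 (scaled_cpoly b k s x)). pose proof (Rabs_pos s). pose proof (Rabs_pos s').
    pose proof (Rabs_pos (s - s')). pose proof (Cmod_ge_0 (x - x')).
    pose proof (Cmod_ge_0 (scaled_cpoly b k s x - scaled_cpoly b k s' x')).
    cbn [scaled_cpoly]. fold c. split.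
    + eapply Rle_trans; [apply Cmod_triangle|]. rewrite Cmod_RtoC_mult, Cmod_mult.
      assert (Rabs s * Cmod (scaled_cpoly b k s x) <= 1 * B) by (apply Rmult_le_compat; auto).
      assert (Cmod c * Cmod (x ^ S k) <= Cmod c * X ^ S k) by (apply Rmult_le_compat_l; auto).
      lra.
    + replace (RtoC s * scaled_cpoly b k s x + c * x ^ S k
               - (RtoC s' * scaled_cpoly b k s' x' + c * x' ^ S k))%C
        with (RtoC (s - s') * scaled_cpoly b k s x
              + RtoC s' * (scaled_cpoly b k s x - scaled_cpoly b k s' x')
              + c * (x ^ S k - x' ^ S k))%C by (rewrite RtoC_minus; ring).
      eapply Rle_trans; [apply Cmod_triangle|].
      eapply Rle_trans; [apply Rplus_le_compat_r, Cmod_triangle|].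
      rewrite !Cmod_RtoC_mult, Cmod_mult.
      assert (Rabs (s - s') * Cmod (scaled_cpoly b k s x) <= Rabs (s - s') * B)
        by (apply Rmult_le_compat_l; auto).
      assert (Rabs s' * Cmod (scaled_cpoly b k s x - scaled_cpoly b k s' x')
              <= 1 * (L * (Rabs (s - s') + Cmod (x - x')))) by (apply Rmult_le_compat; auto).
      assert (Cmod c * Cmod (x ^ S k - x' ^ S k) <= Cmod c * (Lp * Cmod (x - x')))
        by (apply Rmult_le_compat_l; auto).
      assert (0 <= B * Cmod (x - x')) by (apply Rmult_le_pos; auto).
      assert (0 <= Cmod c * Lp * Rabs (s - s')) by (repeat apply Rmult_le_pos; auto).
      lra.
Qed.

Definition locally_lipschitz (F : C -> C) : Prop :=
  forall X, 0 <= X -> exists L, 0 <= L /\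
    forall z w, Cmod z <= X -> Cmod w <= X -> Cmod (F z - F w) <= L * Cmod (z - w).

Lemma cpoly_locally_lipschitz (alpha : nat -> C) (d : nat) : locally_lipschitz (cpoly alpha d).
Proof.
  intros X HX. destruct (scaled_cpoly_lipschitz alpha d X HX) as [B [L [_ [HL H]]]].
  exists L. split; auto. intros z w Hz Hw.
  assert (H1 : Rabs 1 <= 1) by (rewrite Rabs_R1; lra).
  destruct (H 1 1 z w H1 H1 Hz Hw) as [_ Hlip].
  rewrite !scaled_cpoly_1, Rminus_eq_0, Rabs_R0, Rplus_0_l in Hlip. exact Hlip.
Qed.

Lemma derivable_pt_lim_eq (f g : R -> R) (x l l' : R) :
  (forall t, f t = g t) -> l = l' -> derivable_pt_lim f x l -> derivable_pt_lim g x l'.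
Proof.
  intros Hfg <- H. apply is_derive_Reals. apply is_derive_Reals in H.
  exact (is_derive_ext f g x l Hfg H).
Qed.

Lemma derivable_pt_lim_continuity_pt (f : R -> R) (x l : R) :
  derivable_pt_lim f x l -> continuity_pt f x.
Proof. intros H. apply derivable_continuous_pt. now exists l. Qed.

Lemma derivable_pt_lim_exp_scal (c x : R) :
  derivable_pt_lim (fun s => exp (c * s)) x (exp (c * x) * c).
Proof.
  apply (derivable_pt_lim_comp (fun s => c * s) exp).
  - apply derivable_pt_lim_eq with (f := fun s => c * id s) (l := c * 1); [reflexivity | ring |].
    apply derivable_pt_lim_scal, derivable_pt_lim_id.
  - apply derivable_pt_lim_exp.
Qed.

Definition has_Cderive (f : R -> C) (t : R) (df : C) : Prop :=
  derivable_pt_lim (fun s => fst (f s)) t (fst df) /\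
  derivable_pt_lim (fun s => snd (f s)) t (snd df).

Lemma has_Cderive_eq (f g : R -> C) (t : R) (df dg : C) :
  (forall s, f s = g s) -> df = dg -> has_Cderive f t df -> has_Cderive g t dg.
Proof.
  intros Hfg <- [H1 H2]. split.
  - apply derivable_pt_lim_eq with (fun s => fst (f s)) (fst df); auto. intros s. now rewrite Hfg.
  - apply derivable_pt_lim_eq with (fun s => snd (f s)) (snd df); auto. intros s. now rewrite Hfg.
Qed.

Lemma has_Cderive_add_const (c : C) (f : R -> C) (t : R) (df : C) :
  has_Cderive f t df -> has_Cderive (fun s => c + f s)%C t df.
Proof.
  intros [H1 H2]. split.
  - apply derivable_pt_lim_eq with (fun s => fst c + fst (f s)) (0 + fst df); [reflexivity | ring |].
    apply derivable_pt_lim_plus; [apply derivable_pt_lim_const | exact H1].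
  - apply derivable_pt_lim_eq with (fun s => snd c + snd (f s)) (0 + snd df); [reflexivity | ring |].
    apply derivable_pt_lim_plus; [apply derivable_pt_lim_const | exact H2].
Qed.

Lemma has_Cderive_Cmult_l (c : C) (f : R -> C) (t : R) (df : C) :
  has_Cderive f t df -> has_Cderive (fun s => c * f s)%C t (c * df)%C.
Proof.
  intros [H1 H2].
  assert (D : forall u v du dv : R, derivable_pt_lim (fun s => fst (f s)) t du ->
    derivable_pt_lim (fun s => snd (f s)) t dv ->
    derivable_pt_lim (fun s => u * fst (f s) + v * snd (f s)) t (u * du + v * dv)).
  { intros u v du dv Du Dv. apply (derivable_pt_lim_plus (fun s => u * fst (f s)) (fun s => v * snd (f s)));
      apply derivable_pt_lim_scal; assumption. }
  split.
  - apply derivable_pt_lim_eq with (fun s => fst c * fst (f s) + (- snd c) * snd (f s))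
      (fst c * fst df + (- snd c) * snd df); [intros; simpl; ring | simpl; ring | now apply D].
  - apply derivable_pt_lim_eq with (fun s => snd c * fst (f s) + fst c * snd (f s))
      (snd c * fst df + fst c * snd df); [intros; simpl; ring | simpl; ring | now apply D].
Qed.

Lemma has_Cderive_RtoC_mult (g : R -> R) (f : R -> C) (t dg : R) (df : C) :
  derivable_pt_lim g t dg -> has_Cderive f t df ->
  has_Cderive (fun s => RtoC (g s) * f s)%C t (RtoC dg * f t + RtoC (g t) * df)%C.
Proof.
  intros Hg [H1 H2]. split.
  - apply derivable_pt_lim_eq with (fun s => g s * fst (f s)) (dg * fst (f t) + g t * fst df);
      [intros; simpl; ring | simpl; ring | now apply (derivable_pt_lim_mult g)].
  - apply derivable_pt_lim_eq with (fun s => g s * snd (f s)) (dg * snd (f t) + g t * snd df);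
      [intros; simpl; ring | simpl; ring | now apply (derivable_pt_lim_mult g)].
Qed.

Lemma has_Cderive_comp (f : R -> C) (g : R -> R) (t dg : R) (df : C) :
  derivable_pt_lim g t dg -> has_Cderive f (g t) df ->
  has_Cderive (fun s => f (g s)) t (RtoC dg * df)%C.
Proof.
  intros Hg [H1 H2]. split.
  - apply derivable_pt_lim_eq with (fun s => fst (f (g s))) (fst df * dg);
      [reflexivity | simpl; ring | exact (derivable_pt_lim_comp g (fun u => fst (f u)) t dg _ Hg H1)].
  - apply derivable_pt_lim_eq with (fun s => snd (f (g s))) (snd df * dg);
      [reflexivity | simpl; ring | exact (derivable_pt_lim_comp g (fun u => snd (f u)) t dg _ Hg H2)].
Qed.

Lemma lipschitz_continuity_pt (f : R -> R) (K : R) :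
  (forall r r', Rabs (f r - f r') <= K * Rabs (r - r')) -> forall x, continuity_pt f x.
Proof.
  intros H x eps Heps. pose proof (Rabs_pos K). exists (eps / (Rabs K + 1)).
  split; [apply Rdiv_lt_0_compat; lra|].
  intros y [_ Hy]. simpl in *. unfold R_dist in *.
  pose proof (H y x). pose proof (Rle_abs K). pose proof (Rabs_pos (y - x)).
  assert (K * Rabs (y - x) <= Rabs K * Rabs (y - x)) by (apply Rmult_le_compat_r; auto).
  assert (Rabs K * Rabs (y - x) <= Rabs K * (eps / (Rabs K + 1))) by (apply Rmult_le_compat_l; lra).
  assert (Rabs K * (eps / (Rabs K + 1)) < eps)
    by (apply Rmult_lt_reg_r with (Rabs K + 1); [lra|]; field_simplify; lra).
  lra.
Qed.

Lemma ex_RInt_continuity_pt (f : R -> R) (a b : R) :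
  (forall x, continuity_pt f x) -> ex_RInt f a b.
Proof.
  intros H. apply (ex_RInt_continuous (V := R_CompleteNormedModule)).
  intros z _. now apply continuity_pt_filterlim.
Qed.

Definition Ccontinuous (f : R -> C) : Prop :=
  forall x, continuity_pt (fun r => fst (f r)) x /\ continuity_pt (fun r => snd (f r)) x.

Definition CInt01 (f : R -> C) : C :=
  (RInt (fun r => fst (f r)) 0 1, RInt (fun r => snd (f r)) 0 1).

Lemma Ccontinuous_lipschitz (f : R -> C) (K : R) :
  (forall r r', Cmod (f r - f r') <= K * Rabs (r - r')) -> Ccontinuous f.
Proof.
  intros H x. split; apply (lipschitz_continuity_pt _ K); intros r r'; eapply Rle_trans;
    [apply (Cmod_fst_le (f r - f r')) | apply H | apply (Cmod_snd_le (f r - f r')) | apply H].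
Qed.

Lemma Ccontinuous_const (c : C) : Ccontinuous (fun _ => c).
Proof. intros x. split; apply continuity_pt_const; now intros ? ?. Qed.

Definition Cscale (c : R) (z : C) : C := (c * fst z, c * snd z).

Lemma Ccontinuous_Cscale_pow (f : R -> C) (m : nat) :
  Ccontinuous f -> Ccontinuous (fun r => Cscale (r ^ m) (f r)).
Proof.
  intros H x. destruct (H x) as [H1 H2].
  assert (Hpow : continuity_pt (fun r => r ^ m) x)
    by apply derivable_continuous_pt, derivable_pt_pow.
  split; [exact (continuity_pt_mult _ _ x Hpow H1) | exact (continuity_pt_mult _ _ x Hpow H2)].
Qed.

Lemma Cscale_RtoC_mult (c : R) (z : C) : Cscale c z = (RtoC c * z)%C.
Proof. apply C_pair_eq; simpl; ring. Qed.

Lemma CInt01_sub_le (f g : R -> C) (M : R) :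
  Ccontinuous f -> Ccontinuous g -> (forall r, 0 <= r <= 1 -> Cmod (f r - g r) <= M) ->
  Cmod (CInt01 f - CInt01 g) <= 2 * M.
Proof.
  intros Hf Hg HM.
  assert (Hex : forall h : R -> C, Ccontinuous h ->
            ex_RInt (fun r => fst (h r)) 0 1 /\ ex_RInt (fun r => snd (h r)) 0 1)
    by (intros h Hh; split; apply ex_RInt_continuity_pt; intros x; apply Hh).
  destruct (Hex f Hf) as [Ef1 Ef2]. destruct (Hex g Hg) as [Eg1 Eg2].
  eapply Rle_trans; [apply Cmod_le_abs_sum|]. unfold CInt01; simpl.
  change (?a + - ?b) with (a - b).
  rewrite <- (RInt_minus (fun r => fst (f r)) (fun r => fst (g r))) by assumption.
  rewrite <- (RInt_minus (fun r => snd (f r)) (fun r => snd (g r))) by assumption.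
  assert (B1 : Rabs (RInt (fun r => fst (f r) - fst (g r)) 0 1) <= (1 - 0) * M).
  { apply abs_RInt_le_const; [lra | now apply (ex_RInt_minus (fun r => fst (f r)) (fun r => fst (g r))) |].
    intros t Ht. eapply Rle_trans; [apply (Cmod_fst_le (f t - g t)) | now apply HM]. }
  assert (B2 : Rabs (RInt (fun r => snd (f r) - snd (g r)) 0 1) <= (1 - 0) * M).
  { apply abs_RInt_le_const; [lra | now apply (ex_RInt_minus (fun r => snd (f r)) (fun r => snd (g r))) |].
    intros t Ht. eapply Rle_trans; [apply (Cmod_snd_le (f t - g t)) | now apply HM]. }
  change (fun x => minus (fst (f x)) (fst (g x))) with (fun r => fst (f r) - fst (g r)).
  change (fun x => minus (snd (f x)) (snd (g x))) with (fun r => snd (f r) - snd (g r)).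
  lra.
Qed.

Lemma CInt01_zero : CInt01 (fun _ => RtoC 0) = RtoC 0.
Proof.
  unfold CInt01; simpl. rewrite !RInt_const.
  unfold scal; simpl; unfold mult; simpl. apply C_pair_eq; simpl; ring.
Qed.

Lemma pow_le_1 (r : R) (k : nat) : 0 <= r <= 1 -> 0 <= r ^ k <= 1.
Proof. intros Hr. split; [apply pow_le; lra | rewrite <- (pow1 k); apply pow_incr; lra]. Qed.

(** * Picard iteration *)

Lemma geometric_half_small (c e : R) : 0 < e -> exists N, forall k, (k >= N)%nat -> c * (1/2) ^ k < e.
Proof.
  intros He. destruct (Req_dec c 0) as [->|Hc]; [exists O; intros; lra|].
  pose proof (Rabs_pos_lt c Hc).
  destruct (pow_lt_1_zero (1/2) ltac:(rewrite Rabs_right; lra) (e / Rabs c)) as [N HN];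
    [apply Rdiv_lt_0_compat; lra|].
  exists N. intros k Hk. specialize (HN k Hk).
  rewrite Rabs_right in HN by (apply Rle_ge, pow_le; lra).
  pose proof (Rle_abs c). pose proof (pow_le (1/2) k ltac:(lra)).
  apply Rle_lt_trans with (Rabs c * (1/2) ^ k); [apply Rmult_le_compat_r; lra|].
  apply Rmult_lt_reg_r with (/ Rabs c); [apply Rinv_0_lt_compat; lra|].
  replace (Rabs c * (1/2) ^ k * / Rabs c) with ((1/2) ^ k) by (field; lra). exact HN.
Qed.

Lemma le_of_le_add_geometric (X Y B : R) : (forall k, X <= Y + B * (1/2) ^ k) -> X <= Y.
Proof.
  intros H. apply Rle_plus_epsilon. intros e He. destruct (geometric_half_small B e He) as [N HN].
  specialize (H N). specialize (HN N (le_n N)). lra.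
Qed.

Lemma C_geometric_limit (x : nat -> C) (c : R) : 0 <= c ->
  (forall k, Cmod (x (S k) - x k) <= c * (1/2) ^ k) ->
  exists l, forall k, Cmod (l - x k) <= 2 * c * (1/2) ^ k.
Proof.
  intros Hc Hx.
  assert (Hpart : forall k j, Cmod (x (k + j)%nat - x k) <= 2 * c * (1/2) ^ k * (1 - (1/2) ^ j)).
  { intros k j. induction j as [|j IH].
    - rewrite Nat.add_0_r. replace (x k - x k)%C with (RtoC 0) by ring. rewrite Cmod_0. simpl. lra.
    - eapply Rle_trans; [apply (Cmod_sub_triangle _ (x (k + j)%nat))|].
      replace (k + S j)%nat with (S (k + j)) by lia. specialize (Hx (k + j)%nat).
      rewrite pow_add in Hx. simpl pow at 2. simpl pow in IH |- *. lra. }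
  assert (Htail : forall k j, (k <= j)%nat -> Cmod (x j - x k) <= 2 * c * (1/2) ^ k).
  { intros k j Hkj. replace j with (k + (j - k))%nat by lia. eapply Rle_trans; [apply Hpart|].
    pose proof (pow_le (1/2) (j - k)). pose proof (pow_le (1/2) k).
    assert (0 <= 2 * c * (1/2) ^ k) by (apply Rmult_le_pos; lra). nra. }
  assert (Hcauchy : forall p : C -> R, (forall z, Rabs (p z) <= Cmod z) ->
            (forall z w, p (z - w)%C = p z - p w) -> Cauchy_crit (fun k => p (x k))).
  { intros p Hp Hlin e He. destruct (geometric_half_small (2 * c) e He) as [N HN].
    exists N. intros i j Hi Hj. unfold Rdist. rewrite <- Hlin. eapply Rle_lt_trans; [apply Hp|].
    destruct (Nat.le_ge_cases i j).
    - rewrite Cmod_sub_sym. eapply Rle_lt_trans; [apply Htail; auto | apply HN; lia].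
    - eapply Rle_lt_trans; [apply Htail; auto | apply HN; lia]. }
  destruct (Rcomplete.R_complete _ (Hcauchy fst Cmod_fst_le (fun z w => eq_refl))) as [l1 Hl1].
  destruct (Rcomplete.R_complete _ (Hcauchy snd Cmod_snd_le (fun z w => eq_refl))) as [l2 Hl2].
  exists (l1, l2). intros k. apply Rle_plus_epsilon. intros e He.
  destruct (Hl1 (e/2) ltac:(lra)) as [N1 HN1]. destruct (Hl2 (e/2) ltac:(lra)) as [N2 HN2].
  set (N := (N1 + N2 + k)%nat).
  specialize (HN1 N ltac:(unfold N; lia)). specialize (HN2 N ltac:(unfold N; lia)).
  eapply Rle_trans; [apply (Cmod_sub_triangle _ (x N))|].
  pose proof (Htail k N ltac:(unfold N; lia)).
  pose proof (Cmod_le_abs_sum ((l1, l2) - x N)%C) as Hsum. simpl in Hsum. unfold Rdist in *.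
  change (?a + - ?b) with (a - b) in Hsum. rewrite Rabs_minus_sym in HN1, HN2. lra.
Qed.

Lemma RInt_pow_weight_rescale (m : nat) (h : R -> R) (s : R) :
  0 < s -> (forall x, continuity_pt (fun u => u ^ m * h u) x) ->
  RInt (fun r => r ^ m * h (s * r)) 0 1 = RInt (fun u => u ^ m * h u) 0 s / s ^ S m.
Proof.
  intros Hs HF. set (F := fun u => u ^ m * h u).
  assert (Hsm : s ^ m <> 0) by (apply pow_nonzero; lra).
  rewrite (RInt_ext _ (fun r => scal (/ s ^ S m) (scal s (F (s * r + 0))))).
  - rewrite (RInt_scal (V := R_CompleteNormedModule)).
    + assert (EQ := RInt_comp_lin (V := R_CompleteNormedModule) F s 0 0 1
                      ltac:(apply ex_RInt_continuity_pt; auto)).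
      unfold scal in *; simpl in *; unfold mult in *; simpl in *. rewrite EQ.
      replace (s * 0 + 0) with 0 by ring. replace (s * 1 + 0) with s by ring. unfold Rdiv. ring.
    + apply (ex_RInt_ext (fun y => s * F (s * y + 0))); [reflexivity|].
      apply ex_RInt_continuity_pt. intros x. apply continuity_pt_mult.
      * apply continuity_pt_const. now intros ? ?.
      * apply (continuity_pt_comp (fun y => s * y + 0) F); [|apply HF].
        apply derivable_continuous_pt, derivable_pt_plus;
          [apply derivable_pt_scal, derivable_pt_id | apply derivable_pt_const].
  - intros x _. unfold scal, F; simpl; unfold mult; simpl.
    replace (s * x + 0) with (s * x) by ring. rewrite Rpow_mult_distr. simpl pow at 2.
    field. split; lra.
Qed.

(* Solutions of [s mu'(s) + (m + 1) mu(s) = G(s, mu(s))] that are regular at [s = 0] are exactly the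
   fixed points of [mu |-> (s |-> int_0^1 r^m G(s r, mu(s r)) dr)]; for [G] contracting in its second
   argument this map contracts a ball of Lipschitz functions. *)
Section Picard.

Variable m : nat.
Variable G : R -> C -> C.
Variables rho Ls : R.
Hypothesis rho_pos : 0 < rho.
Hypothesis Ls_ge0 : 0 <= Ls.
Hypothesis G_contract : forall s u u', Cmod u <= rho -> Cmod u' <= rho ->
  Cmod (G s u - G s u') <= 1/4 * Cmod (u - u').
Hypothesis G_lipschitz_time : forall s s' u, Cmod u <= rho -> Cmod (G s u - G s' u) <= Ls * Rabs (s - s').
Hypothesis G_small : forall s, Cmod (G s 0) <= rho / 4.

Definition lip_ball (mu : R -> C) : Prop :=
  (forall s, Cmod (mu s) <= rho) /\ (forall s s', Cmod (mu s - mu s') <= 4 * Ls * Rabs (s - s')).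

Definition picard_op (mu : R -> C) (s : R) : C :=
  CInt01 (fun r => Cscale (r ^ m) (G (s * r) (mu (s * r)))).

Lemma G_along_lipschitz (mu : R -> C) : lip_ball mu ->
  forall a b, Cmod (G a (mu a) - G b (mu b)) <= 2 * Ls * Rabs (a - b).
Proof.
  intros [Hb Hl] a b. eapply Rle_trans; [apply (Cmod_sub_triangle _ (G a (mu b)))|].
  pose proof (G_contract a _ _ (Hb a) (Hb b)). pose proof (G_lipschitz_time a b (mu b) (Hb b)).
  pose proof (Hl a b). lra.
Qed.

Lemma G_along_continuous (mu : R -> C) (s : R) :
  lip_ball mu -> Ccontinuous (fun r => G (s * r) (mu (s * r))).
Proof.
  intros Hmu. apply (Ccontinuous_lipschitz _ (2 * Ls * Rabs s)). intros r r'.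
  eapply Rle_trans; [apply G_along_lipschitz; exact Hmu|].
  replace (s * r - s * r') with (s * (r - r')) by ring. rewrite Rabs_mult. lra.
Qed.

Lemma picard_integrand_continuous (mu : R -> C) (s : R) :
  lip_ball mu -> Ccontinuous (fun r => Cscale (r ^ m) (G (s * r) (mu (s * r)))).
Proof. intros Hmu. apply Ccontinuous_Cscale_pow, G_along_continuous, Hmu. Qed.

Lemma picard_integrand_sub_le (z w : R -> C) (M : R) :
  (forall r, 0 <= r <= 1 -> Cmod (z r - w r) <= M) ->
  forall r, 0 <= r <= 1 -> Cmod (Cscale (r ^ m) (z r) - Cscale (r ^ m) (w r)) <= M.
Proof.
  intros HM r Hr. rewrite !Cscale_RtoC_mult.
  replace (RtoC (r ^ m) * z r - RtoC (r ^ m) * w r)%C with (RtoC (r ^ m) * (z r - w r))%C by ring.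
  rewrite Cmod_RtoC_mult. destruct (pow_le_1 r m Hr). rewrite Rabs_right by lra.
  pose proof (HM r Hr). pose proof (Cmod_ge_0 (z r - w r)). nra.
Qed.

Lemma picard_op_bound (mu : R -> C) (s M : R) : lip_ball mu ->
  (forall r, 0 <= r <= 1 -> Cmod (G (s * r) (mu (s * r))) <= M) -> Cmod (picard_op mu s) <= 2 * M.
Proof.
  intros Hmu HM.
  replace (picard_op mu s) with (picard_op mu s - CInt01 (fun _ => RtoC 0))%C
    by (rewrite CInt01_zero; ring).
  apply CInt01_sub_le; [apply picard_integrand_continuous, Hmu | apply Ccontinuous_const |].
  intros r Hr. rewrite Csub_0_r, Cscale_RtoC_mult, Cmod_RtoC_mult.
  destruct (pow_le_1 r m Hr). rewrite Rabs_right by lra.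
  pose proof (HM r Hr). pose proof (Cmod_ge_0 (G (s * r) (mu (s * r)))). nra.
Qed.

Lemma picard_op_sub (mu nu : R -> C) (D : R) : lip_ball mu -> lip_ball nu ->
  (forall s, Cmod (mu s - nu s) <= D) -> forall s, Cmod (picard_op mu s - picard_op nu s) <= D / 2.
Proof.
  intros Hmu Hnu HD s.
  replace (D / 2) with (2 * (1/4 * D)) by field.
  apply CInt01_sub_le; try apply picard_integrand_continuous; auto.
  apply (picard_integrand_sub_le (fun r => G (s * r) (mu (s * r))) (fun r => G (s * r) (nu (s * r)))).
  intros r _. eapply Rle_trans; [apply G_contract; [apply Hmu | apply Hnu]|].
  apply Rmult_le_compat_l; [lra | apply HD].
Qed.

Lemma picard_op_lipschitz (mu : R -> C) : lip_ball mu ->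
  forall s s', Cmod (picard_op mu s - picard_op mu s') <= 4 * Ls * Rabs (s - s').
Proof.
  intros Hmu s s'. replace (4 * Ls * Rabs (s - s')) with (2 * (2 * Ls * Rabs (s - s'))) by ring.
  apply CInt01_sub_le; try apply picard_integrand_continuous; auto.
  apply (picard_integrand_sub_le (fun r => G (s * r) (mu (s * r))) (fun r => G (s' * r) (mu (s' * r)))).
  intros r Hr. eapply Rle_trans; [apply G_along_lipschitz, Hmu|].
  replace (s * r - s' * r) with ((s - s') * r) by ring. rewrite Rabs_mult, (Rabs_right r) by lra.
  pose proof (Rabs_pos (s - s')).
  assert (0 <= 2 * Ls * Rabs (s - s')) by (apply Rmult_le_pos; lra). nra.
Qed.

Lemma picard_op_lip_ball (mu : R -> C) : lip_ball mu -> lip_ball (picard_op mu).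
Proof.
  intros Hmu. split; [|now apply picard_op_lipschitz].
  intros s. replace rho with (2 * (rho / 2)) by field. apply picard_op_bound; auto.
  intros r _. destruct Hmu as [Hb _]. set (x := s * r).
  replace (G x (mu x)) with (G x (mu x) - G x 0 + G x 0)%C by ring.
  eapply Rle_trans; [apply Cmod_triangle|].
  assert (H0 : Cmod (RtoC 0) <= rho) by (rewrite Cmod_0; lra).
  pose proof (G_contract x _ _ (Hb x) H0). pose proof (G_small x). pose proof (Hb x).
  rewrite Csub_0_r in *. lra.
Qed.

Fixpoint picard_iter (k : nat) : R -> C :=
  match k with O => fun _ => RtoC 0 | S j => picard_op (picard_iter j) end.

Lemma picard_iter_lip_ball (k : nat) : lip_ball (picard_iter k).
Proof.
  induction k as [|k IH]; [|now apply picard_op_lip_ball].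
  split; intros; simpl; [rewrite Cmod_0; lra|].
  rewrite Csub_0_r, Cmod_0. pose proof (Rabs_pos (s - s')). nra.
Qed.

Lemma picard_iter_step (k : nat) (s : R) :
  Cmod (picard_iter (S k) s - picard_iter k s) <= 2 * rho * (1/2) ^ k.
Proof.
  revert s. induction k as [|k IH]; intros s.
  - simpl. rewrite Csub_0_r. pose proof (proj1 (picard_iter_lip_ball 1) s). simpl in *. lra.
  - eapply Rle_trans;
      [apply (picard_op_sub _ _ _ (picard_iter_lip_ball (S k)) (picard_iter_lip_ball k) IH)|].
    simpl. lra.
Qed.

Theorem picard_fixed_point : exists mu, lip_ball mu /\ forall s, mu s = picard_op mu s.
Proof.
  assert (Hlim : forall s, exists l, forall k, Cmod (l - picard_iter k s) <= 2 * (2 * rho) * (1/2) ^ k)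
    by (intros s; apply C_geometric_limit; [lra | intros k; apply picard_iter_step]).
  destruct (choice _ Hlim) as [mu Hmu].
  assert (Hball : lip_ball mu).
  { split.
    - intros s. apply (le_of_le_add_geometric _ _ (4 * rho)). intros k.
      replace (mu s) with ((mu s - picard_iter k s) + picard_iter k s)%C by ring.
      eapply Rle_trans; [apply Cmod_triangle|].
      pose proof (Hmu s k). pose proof (proj1 (picard_iter_lip_ball k) s). lra.
    - intros s s'. apply (le_of_le_add_geometric _ _ (8 * rho)). intros k.
      eapply Rle_trans; [apply (Cmod_sub_triangle _ (picard_iter k s))|].
      eapply Rle_trans; [apply Rplus_le_compat_l, (Cmod_sub_triangle _ (picard_iter k s'))|].
      pose proof (Hmu s k). pose proof (Hmu s' k). rewrite Cmod_sub_sym in H0.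
      pose proof (proj2 (picard_iter_lip_ball k) s s'). lra. }
  exists mu. split; auto. intros s.
  assert (Hzero : Cmod (mu s - picard_op mu s) <= 0).
  { apply (le_of_le_add_geometric _ _ (4 * rho)). intros k.
    eapply Rle_trans; [apply (Cmod_sub_triangle _ (picard_iter (S k) s))|].
    pose proof (Hmu s (S k)) as Hk. simpl pow in Hk.
    assert (Hdist : forall s, Cmod (picard_iter k s - mu s) <= 4 * rho * (1/2) ^ k)
      by (intros s'; rewrite Cmod_sub_sym; pose proof (Hmu s' k); lra).
    pose proof (picard_op_sub _ _ _ (picard_iter_lip_ball k) Hball Hdist s). simpl in *. lra. }
  pose proof (Cmod_ge_0 (mu s - picard_op mu s)).
  assert (E : (mu s - picard_op mu s)%C = RtoC 0) by (apply Cmod_eq_0; lra).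
  replace (mu s) with ((mu s - picard_op mu s) + picard_op mu s)%C by ring. rewrite E. ring.
Qed.

Section Fixed_point.

Variable mu : R -> C.
Hypothesis mu_ball : lip_ball mu.
Hypothesis mu_fixed : forall s, mu s = picard_op mu s.

Lemma fixed_point_at_0 : G 0 0 = 0 -> mu 0 = 0.
Proof.
  intros HG0.
  assert (Hb : Cmod (mu 0) <= 2 * (1/4 * Cmod (mu 0))).
  { rewrite mu_fixed at 1. apply picard_op_bound; auto. intros r _. rewrite Rmult_0_l.
    replace (G 0 (mu 0)) with (G 0 (mu 0) - G 0 0)%C by (rewrite HG0; apply Csub_0_r).
    replace (Cmod (mu 0)) with (Cmod (mu 0 - 0)) by now rewrite Csub_0_r.
    apply G_contract; [apply mu_ball | rewrite Cmod_0; lra]. }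
  apply Cmod_eq_0. pose proof (Cmod_ge_0 (mu 0)). lra.
Qed.

Lemma fixed_point_small : G 0 0 = 0 -> forall s, 0 <= s -> Cmod (mu s) <= 4 * Ls * s.
Proof.
  intros HG0 s Hs. rewrite <- (Csub_0_r (mu s)), <- (fixed_point_at_0 HG0).
  eapply Rle_trans; [apply (proj2 mu_ball)|]. rewrite Rminus_0_r, Rabs_right; lra.
Qed.

Lemma fixed_point_component_derive (p : C -> R) (s : R) :
  (forall z w, Rabs (p z - p w) <= Cmod (z - w)) ->
  (forall s, p (mu s) = RInt (fun r => r ^ m * p (G (s * r) (mu (s * r)))) 0 1) -> 0 < s ->
  derivable_pt_lim (fun s => p (mu s)) s ((p (G s (mu s)) - INR (S m) * p (mu s)) / s).
Proof.
  intros Hp Hmu Hs. set (F := fun u => u ^ m * p (G u (mu u))).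
  assert (HF : forall x, continuity_pt F x).
  { intros x. apply continuity_pt_mult; [apply derivable_continuous_pt, derivable_pt_pow|].
    apply (lipschitz_continuity_pt _ (2 * Ls)). intros r r'.
    eapply Rle_trans; [apply Hp | now apply G_along_lipschitz]. }
  assert (Hrepr : forall x, 0 < x -> p (mu x) = RInt F 0 x / x ^ S m)
    by (intros x Hx; rewrite Hmu; now apply (RInt_pow_weight_rescale m (fun u => p (G u (mu u))))).
  assert (Hsm : s ^ m <> 0) by (apply pow_nonzero; lra).
  apply is_derive_Reals.
  apply (is_derive_ext_loc (fun x => RInt F 0 x / x ^ S m)).
  { exists (mkposreal s Hs). intros x Hx. symmetry. apply Hrepr.
    unfold ball in Hx; simpl in Hx. unfold AbsRing_ball, abs, minus, plus, opp in Hx; simpl in Hx.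
    apply Rabs_def2 in Hx. lra. }
  evar (l : R). replace (_ / s) with l; [subst l; apply is_derive_div|].
  - apply (is_derive_RInt F (fun b => RInt F 0 b) 0).
    + exists (mkposreal 1 Rlt_0_1). intros b _.
      apply (RInt_correct (V := R_CompleteNormedModule)), ex_RInt_continuity_pt, HF.
    + now apply continuity_pt_filterlim.
  - apply (is_derive_pow (fun x => x)), (is_derive_id (K := R_AbsRing)).
  - now apply pow_nonzero; lra.
  - subst l. rewrite (Hrepr s Hs). unfold F, one; simpl. field. split; lra.
Qed.

Lemma fixed_point_derive (s : R) : 0 < s -> exists dmu : C,
  has_Cderive mu s dmu /\ (RtoC s * dmu = G s (mu s) - RtoC (INR (S m)) * mu s)%C.
Proof.
  intros Hs.
  exists (RtoC (/ s) * (G s (mu s) - RtoC (INR (S m)) * mu s))%C. split.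
  - split.
    + apply derivable_pt_lim_eq with (fun s => fst (mu s))
        ((fst (G s (mu s)) - INR (S m) * fst (mu s)) / s); [reflexivity | simpl; field; lra|].
      apply fixed_point_component_derive; auto.
      * intros z w. apply (Cmod_fst_le (z - w)).
      * intros x. exact (f_equal fst (mu_fixed x)).
    + apply derivable_pt_lim_eq with (fun s => snd (mu s))
        ((snd (G s (mu s)) - INR (S m) * snd (mu s)) / s); [reflexivity | simpl; field; lra|].
      apply fixed_point_component_derive; auto.
      * intros z w. apply (Cmod_snd_le (z - w)).
      * intros x. exact (f_equal snd (mu_fixed x)).
  - rewrite Cmult_assoc, <- RtoC_mult, Rinv_r by lra. ring.
Qed.

End Fixed_point.

End Picard.

(** * The blow-up solution *)

Definition sigma (n : nat) (a t : R) : R := Rpower (INR n * a * (- t)) (/ INR n).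

Lemma sigma_pos (n : nat) (a t : R) : 0 < sigma n a t.
Proof. apply exp_pos. Qed.

Lemma Rpower_inv_pow (n : nat) (x : R) : (0 < n)%nat -> 0 < x -> Rpower x (/ INR n) ^ n = x.
Proof.
  intros Hn Hx. assert (0 < INR n) by (apply lt_0_INR; lia).
  rewrite <- Rpower_pow by apply exp_pos. rewrite Rpower_mult.
  replace (/ INR n * INR n) with 1 by (field; lra). now apply Rpower_1.
Qed.

Lemma Rpower_pow_inv (n : nat) (x : R) : (0 < n)%nat -> 0 < x -> Rpower (x ^ n) (/ INR n) = x.
Proof.
  intros Hn Hx. assert (0 < INR n) by (apply lt_0_INR; lia).
  rewrite <- Rpower_pow, Rpower_mult by auto.
  replace (INR n * / INR n) with 1 by (field; lra). now apply Rpower_1.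
Qed.

Section Sigma.

Variables (n : nat) (a : R).
Hypothesis n_pos : (0 < n)%nat.
Hypothesis a_pos : 0 < a.

Lemma sigma_pow (t : R) : t < 0 -> sigma n a t ^ n = INR n * a * (- t).
Proof.
  intros Ht. assert (0 < INR n) by (apply lt_0_INR; lia).
  apply Rpower_inv_pow; auto. apply Rmult_lt_0_compat; [apply Rmult_lt_0_compat|]; lra.
Qed.

Lemma sigma_lt (t e : R) : t < 0 -> 0 < e -> INR n * a * (- t) < e ^ n -> sigma n a t < e.
Proof.
  intros Ht He H. assert (0 < INR n) by (apply lt_0_INR; lia).
  rewrite <- (Rpower_pow_inv n e) by auto.
  apply Rlt_Rpower_l; [now apply Rinv_0_lt_compat|].
  split; auto. apply Rmult_lt_0_compat; [apply Rmult_lt_0_compat|]; lra.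
Qed.

Lemma sigma_small (e : R) : 0 < e ->
  exists delta, 0 < delta /\ forall t, - delta < t < 0 -> sigma n a t < e.
Proof.
  intros He. assert (0 < INR n) by (apply lt_0_INR; lia). assert (0 < e ^ n) by (apply pow_lt; lra).
  exists (e ^ n / (INR n * a)). split; [apply Rdiv_lt_0_compat; nra|].
  intros t Ht. apply sigma_lt; try lra.
  apply Rmult_lt_reg_r with (/ (INR n * a)); [apply Rinv_0_lt_compat; nra|].
  replace (INR n * a * - t * / (INR n * a)) with (- t) by (field; lra). unfold Rdiv in Ht. lra.
Qed.

Lemma sigma_derive (t : R) : t < 0 -> derivable_pt_lim (sigma n a) t (- a * sigma n a t / sigma n a t ^ n).
Proof.
  intros Ht. assert (0 < INR n) by (apply lt_0_INR; lia).
  set (x := INR n * a * (- t)).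
  assert (Hx : 0 < x) by (unfold x; apply Rmult_lt_0_compat; [apply Rmult_lt_0_compat|]; lra).
  apply derivable_pt_lim_eq with (fun s => Rpower (INR n * a * (- s)) (/ INR n))
    (/ INR n * Rpower x (/ INR n - 1) * (INR n * a * (-1))); [reflexivity | |].
  - rewrite sigma_pow by auto. fold x. unfold Rminus. rewrite Rpower_plus, Rpower_Ropp, Rpower_1 by auto.
    unfold sigma. fold x. pose proof (exp_pos (/ INR n * ln x)). unfold Rpower. field. split; lra.
  - apply (derivable_pt_lim_comp (fun s => INR n * a * (- s)) (fun u => Rpower u (/ INR n))).
    + apply derivable_pt_lim_eq with (fun s => INR n * a * (0 - id s)) (INR n * a * (0 - 1));
        [intros; unfold id; ring | ring |].
      apply derivable_pt_lim_scal, derivable_pt_lim_minus;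
        [apply derivable_pt_lim_const | apply derivable_pt_lim_id].
    + now apply derivable_pt_lim_power.
Qed.

End Sigma.

Definition clamp (e s : R) : R := Rmax 0 (Rmin e s).

Lemma clamp_lipschitz (e s s' : R) : Rabs (clamp e s - clamp e s') <= Rabs (s - s').
Proof. unfold clamp, Rmax, Rmin. repeat destruct Rle_dec; unfold Rabs; repeat destruct Rcase_abs; lra. Qed.

Lemma clamp_range (e s : R) : 0 <= e -> 0 <= clamp e s <= e.
Proof. intros. unfold clamp, Rmax, Rmin. repeat destruct Rle_dec; lra. Qed.

Lemma clamp_id (e s : R) : 0 <= s <= e -> clamp e s = s.
Proof. intros. unfold clamp, Rmax, Rmin. repeat destruct Rle_dec; lra. Qed.

Lemma Cconj_mult_r_unit (P : C) : Cmod P = 1 -> (P * Cconj P)%C = RtoC 1.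
Proof. intros H. rewrite <- Cmod2_conj, H. apply C_pair_eq; simpl; ring. Qed.

Section Profile.

Variable alpha : nat -> C.
Variable m : nat.
Variable P : C.
Variable a : R.
Hypothesis a_pos : 0 < a.
Hypothesis P_unit : Cmod P = 1.

(* The coefficients of degree [< m + 2] in the rotated, rescaled frame; see [cpoly_blowup]. *)
Definition lower_terms (s : R) (y : C) : C := (Cconj P * scaled_cpoly alpha (S m) s (P * y))%C.

(* With [y = 1 + u], [z = P y / s] solves [z' = f(z)] along [s' = - a / s ^ m] iff
   [s u' + (m + 1) u = profile_G eps s u] (for [0 < s <= eps]); the linear part [-(m + 1) u] of
   [y - y ^ (m + 2)] has been moved to the left, so that [profile_G] is a contraction in [u].
   Clamping [s] to [[0, eps]] makes it globally Lipschitz in [s]. *)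
Definition profile_rhs (s : R) (y : C) : C :=
  (RtoC (INR (S (S m))) * y - y ^ S (S m) - RtoC (INR (S m)) - RtoC (s / a) * lower_terms s y)%C.

Definition profile_G (eps s : R) (u : C) : C := profile_rhs (clamp eps s) (1 + u)%C.

Lemma lower_terms_lipschitz : exists B L, 0 <= B /\ 0 <= L /\
  forall s s' y y', Rabs s <= 1 -> Rabs s' <= 1 -> Cmod y <= 2 -> Cmod y' <= 2 ->
  Cmod (lower_terms s y) <= B /\
  Cmod (lower_terms s y - lower_terms s' y') <= L * (Rabs (s - s') + Cmod (y - y')).
Proof.
  destruct (scaled_cpoly_lipschitz alpha (S m) 2 ltac:(lra)) as [B [L [HB [HL H]]]].
  exists B, L. split; auto. split; auto. intros s s' y y' Hs Hs' Hy Hy'.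
  assert (HPy : Cmod (P * y) <= 2) by (rewrite Cmod_unit_mult; auto).
  assert (HPy' : Cmod (P * y') <= 2) by (rewrite Cmod_unit_mult; auto).
  assert (Hconj : Cmod (Cconj P) = 1) by now rewrite Cmod_conj.
  destruct (H s s' _ _ Hs Hs' HPy HPy') as [Hbound Hlip]. unfold lower_terms. split.
  - now rewrite Cmod_unit_mult.
  - rewrite <- Cmult_sub_distr_l, Cmod_unit_mult by auto.
    rewrite <- Cmult_sub_distr_l, Cmod_unit_mult in Hlip by auto. exact Hlip.
Qed.

Section Profile_constants.

Variables B L K rho eps : R.
Hypothesis L_ge0 : 0 <= L.
Hypothesis lower_terms_bounds : forall s s' y y',
  Rabs s <= 1 -> Rabs s' <= 1 -> Cmod y <= 2 -> Cmod y' <= 2 ->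
  Cmod (lower_terms s y) <= B /\
  Cmod (lower_terms s y - lower_terms s' y') <= L * (Rabs (s - s') + Cmod (y - y')).
Hypothesis pow_remainder : forall y y', Cmod (y - 1) <= rho -> Cmod (y' - 1) <= rho ->
  Cmod (y ^ S (S m) - y' ^ S (S m) - RtoC (INR (S (S m))) * (y - y')) <= K * rho * Cmod (y - y').
Hypothesis rho_range : 0 < rho <= 1/2.
Hypothesis K_rho : K * rho <= 1/8.
Hypothesis eps_range : 0 < eps <= 1.
Hypothesis eps_L : eps * L <= a / 8.
Hypothesis eps_B : eps * B <= rho * a / 4.

Lemma clamp_eps_bounds (s : R) : Rabs (clamp eps s) <= 1 /\ 0 <= clamp eps s <= eps.
Proof. pose proof (clamp_range eps s ltac:(lra)). split; auto. rewrite Rabs_right; lra. Qed.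

Lemma profile_ball (u : C) : Cmod u <= rho -> Cmod ((1 + u) - 1)%C <= rho /\ Cmod (1 + u)%C <= 2.
Proof.
  intros Hu. replace ((1 + u) - 1)%C with u by ring. split; auto.
  eapply Rle_trans; [apply Cmod_triangle|]. rewrite Cmod_1. lra.
Qed.

Lemma profile_G_contract (s : R) (u u' : C) : Cmod u <= rho -> Cmod u' <= rho ->
  Cmod (profile_G eps s u - profile_G eps s u') <= 1/4 * Cmod (u - u').
Proof.
  intros Hu Hu'. destruct (profile_ball u Hu) as [Y1 Y2]. destruct (profile_ball u' Hu') as [Y1' Y2'].
  destruct (clamp_eps_bounds s) as [Hc1 Hc2]. unfold profile_G, profile_rhs.
  set (c := clamp eps s) in *. set (y := (1 + u)%C) in *. set (y' := (1 + u')%C) in *.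
  replace (y - y')%C with (u - u')%C in * by (unfold y, y'; ring).
  replace (RtoC (INR (S (S m))) * y - y ^ S (S m) - RtoC (INR (S m)) - RtoC (c / a) * lower_terms c y -
      (RtoC (INR (S (S m))) * y' - y' ^ S (S m) - RtoC (INR (S m)) - RtoC (c / a) * lower_terms c y'))%C
    with (- (y ^ S (S m) - y' ^ S (S m) - RtoC (INR (S (S m))) * (u - u'))
          - RtoC (c / a) * (lower_terms c y - lower_terms c y'))%C by (unfold y, y'; ring).
  eapply Rle_trans; [apply (Cmod_sub_triangle _ (RtoC 0))|].
  rewrite Csub_0_r, Cmod_opp, Csub_0_l, Cmod_opp, Cmod_RtoC_mult.
  rewrite Rabs_right by (apply Rle_ge, Rdiv_le_0_compat; lra).
  pose proof (pow_remainder y y' Y1 Y1') as Hrem.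
  replace (y - y')%C with (u - u')%C in Hrem by (unfold y, y'; ring).
  destruct (lower_terms_bounds c c y y' Hc1 Hc1 Y2 Y2') as [_ Hlip].
  rewrite Rminus_eq_0, Rabs_R0, Rplus_0_l in Hlip.
  replace (y - y')%C with (u - u')%C in Hlip by (unfold y, y'; ring).
  pose proof (Cmod_ge_0 (u - u')).
  assert (c / a * Cmod (lower_terms c y - lower_terms c y') <= eps / a * (L * Cmod (u - u'))).
  { apply Rmult_le_compat; [apply Rdiv_le_0_compat; lra | apply Cmod_ge_0 | | exact Hlip].
    unfold Rdiv. apply Rmult_le_compat_r; [left; apply Rinv_0_lt_compat|]; lra. }
  assert (eps / a * (L * Cmod (u - u')) <= 1/8 * Cmod (u - u')).
  { replace (eps / a * (L * Cmod (u - u'))) with ((eps * L) / a * Cmod (u - u')) by (field; lra).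
    apply Rmult_le_compat_r; auto. apply Rmult_le_reg_r with a; auto. field_simplify; lra. }
  assert (K * rho * Cmod (u - u') <= 1/8 * Cmod (u - u')) by (apply Rmult_le_compat_r; auto).
  lra.
Qed.

Lemma profile_G_lipschitz_time (s s' : R) (u : C) : Cmod u <= rho ->
  Cmod (profile_G eps s u - profile_G eps s' u) <= (B + L) / a * Rabs (s - s').
Proof.
  intros Hu. destruct (profile_ball u Hu) as [_ Y]. unfold profile_G, profile_rhs.
  destruct (clamp_eps_bounds s) as [Hc1 Hc2]. destruct (clamp_eps_bounds s') as [Hc1' Hc2'].
  pose proof (clamp_lipschitz eps s s') as Hclamp.
  set (c := clamp eps s) in *. set (c' := clamp eps s') in *. set (y := (1 + u)%C) in *.
  replace (RtoC (INR (S (S m))) * y - y ^ S (S m) - RtoC (INR (S m)) - RtoC (c / a) * lower_terms c y -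
      (RtoC (INR (S (S m))) * y - y ^ S (S m) - RtoC (INR (S m)) - RtoC (c' / a) * lower_terms c' y))%C
    with (RtoC ((c' - c) / a) * lower_terms c y + RtoC (c' / a) * (lower_terms c' y - lower_terms c y))%C
    by (replace ((c' - c) / a) with (c' / a - c / a) by (field; lra); rewrite RtoC_minus; ring).
  eapply Rle_trans; [apply Cmod_triangle|]. rewrite !Cmod_RtoC_mult.
  destruct (lower_terms_bounds c c' y y Hc1 Hc1' Y Y) as [Hbound _].
  destruct (lower_terms_bounds c' c y y Hc1' Hc1 Y Y) as [_ Hlip].
  replace (y - y)%C with (RtoC 0) in Hlip by ring. rewrite Cmod_0, Rplus_0_r, Rabs_minus_sym in Hlip.
  rewrite Rabs_div, (Rabs_right a), (Rabs_right (c' / a)), (Rabs_minus_sym c' c)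
    by (try apply Rle_ge, Rdiv_le_0_compat; lra).
  assert (Rabs (c - c') / a * Cmod (lower_terms c y) <= Rabs (s - s') / a * B).
  { apply Rmult_le_compat;
      [apply Rdiv_le_0_compat; [apply Rabs_pos | lra] | apply Cmod_ge_0 | | exact Hbound].
    unfold Rdiv; apply Rmult_le_compat_r; [left; apply Rinv_0_lt_compat|]; lra. }
  assert (c' / a * Cmod (lower_terms c' y - lower_terms c y) <= 1 / a * (L * Rabs (s - s'))).
  { apply Rmult_le_compat; [apply Rdiv_le_0_compat; lra | apply Cmod_ge_0 | |].
    - unfold Rdiv; apply Rmult_le_compat_r; [left; apply Rinv_0_lt_compat|]; lra.
    - eapply Rle_trans; [exact Hlip|]. apply Rmult_le_compat_l; lra. }
  replace ((B + L) / a * Rabs (s - s')) with (Rabs (s - s') / a * B + 1 / a * (L * Rabs (s - s')))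
    by (field; lra).
  lra.
Qed.

Lemma profile_G_small (s : R) : Cmod (profile_G eps s 0) <= rho / 4.
Proof.
  destruct (clamp_eps_bounds s) as [Hc1 Hc2]. unfold profile_G, profile_rhs.
  set (c := clamp eps s) in *. replace (1 + RtoC 0)%C with (RtoC 1) by ring.
  replace (RtoC (INR (S (S m))) * RtoC 1 - RtoC 1 ^ S (S m) - RtoC (INR (S m))
           - RtoC (c / a) * lower_terms c (RtoC 1))%C
    with (- (RtoC (c / a) * lower_terms c (RtoC 1)))%C
    by (rewrite Cpow_1_l, !S_INR, !RtoC_plus; ring).
  rewrite Cmod_opp, Cmod_RtoC_mult, Rabs_right by (apply Rle_ge, Rdiv_le_0_compat; lra).
  assert (H1 : Cmod (RtoC 1) <= 2) by (rewrite Cmod_1; lra).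
  destruct (lower_terms_bounds c c (RtoC 1) (RtoC 1) Hc1 Hc1 H1 H1) as [Hbound _].
  assert (c / a * Cmod (lower_terms c 1) <= eps / a * B).
  { apply Rmult_le_compat; [apply Rdiv_le_0_compat; lra | apply Cmod_ge_0 | | exact Hbound].
    unfold Rdiv; apply Rmult_le_compat_r; [left; apply Rinv_0_lt_compat|]; lra. }
  assert (eps / a * B <= rho / 4).
  { replace (eps / a * B) with (eps * B / a) by (field; lra).
    apply Rmult_le_reg_r with a; auto. field_simplify; lra. }
  lra.
Qed.

End Profile_constants.

Lemma profile_constants : exists rho eps Ls, 0 < rho <= 1/2 /\ 0 < eps <= 1 /\ 0 <= Ls /\
  (forall s u u', Cmod u <= rho -> Cmod u' <= rho ->
     Cmod (profile_G eps s u - profile_G eps s u') <= 1/4 * Cmod (u - u')) /\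
  (forall s s' u, Cmod u <= rho -> Cmod (profile_G eps s u - profile_G eps s' u) <= Ls * Rabs (s - s')) /\
  (forall s, Cmod (profile_G eps s 0) <= rho / 4).
Proof.
  destruct lower_terms_lipschitz as [B [L [HB [HL Hlower]]]].
  destruct (Cpow_linear_remainder_near_1 (S (S m))) as [K [HK Hrem]].
  set (rho := 1 / (8 * K + 2)).
  assert (Hr : 0 < rho <= 1/2).
  { unfold rho. split; [apply Rdiv_lt_0_compat; lra|].
    apply Rmult_le_reg_r with (8 * K + 2); [lra|]. field_simplify; lra. }
  assert (HKr : K * rho <= 1/8).
  { unfold rho. apply Rmult_le_reg_r with (8 * K + 2); [lra|]. field_simplify; lra. }
  set (eps := Rmin 1 (Rmin (a / (8 * L + 8)) (rho * a / (4 * B + 4)))).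
  assert (He : 0 < eps <= 1).
  { unfold eps. split; [|apply Rmin_l].
    apply Rmin_glb_lt; [lra|]. apply Rmin_glb_lt; apply Rdiv_lt_0_compat; nra. }
  assert (HeL : eps * L <= a / 8).
  { assert (eps <= a / (8 * L + 8)) by (unfold eps; eapply Rle_trans; [apply Rmin_r | apply Rmin_l]).
    apply Rle_trans with (a / (8 * L + 8) * L); [apply Rmult_le_compat_r; lra|].
    apply Rmult_le_reg_r with (8 * L + 8); [lra|]. field_simplify; nra. }
  assert (HeB : eps * B <= rho * a / 4).
  { assert (eps <= rho * a / (4 * B + 4)) by (unfold eps; eapply Rle_trans; [apply Rmin_r | apply Rmin_r]).
    apply Rle_trans with (rho * a / (4 * B + 4) * B); [apply Rmult_le_compat_r; lra|].
    apply Rmult_le_reg_r with (4 * B + 4); [lra|]. field_simplify; nra. }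
  assert (Hrem' : forall y y', Cmod (y - 1) <= rho -> Cmod (y' - 1) <= rho ->
    Cmod (y ^ S (S m) - y' ^ S (S m) - RtoC (INR (S (S m))) * (y - y')) <= K * rho * Cmod (y - y'))
    by (intros; apply Hrem; auto; lra).
  exists rho, eps, ((B + L) / a). do 3 (split; [auto; apply Rdiv_le_0_compat; lra|]).
  split; [|split]; intros.
  - now apply (profile_G_contract B L K rho eps).
  - now apply (profile_G_lipschitz_time B L rho eps).
  - now apply (profile_G_small B L rho eps).
Qed.

Lemma profile_G_at_0 (eps : R) : 0 <= eps -> profile_G eps 0 0 = 0.
Proof.
  intros He. unfold profile_G, profile_rhs. rewrite clamp_id by lra.
  replace (0 / a) with 0 by (field; lra). replace (1 + RtoC 0)%C with (RtoC 1) by ring.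
  rewrite Cpow_1_l, !S_INR, !RtoC_plus. ring.
Qed.

Hypothesis leading_direction : (alpha (S (S m)) * P ^ S (S m) = RtoC a * P)%C.

Lemma cpoly_blowup (s : R) (y : C) : s <> 0 ->
  cpoly alpha (S (S m)) (RtoC (/ s) * (P * y))%C =
  (RtoC (/ s ^ S (S m)) * (P * (RtoC a * y ^ S (S m) + RtoC s * lower_terms s y)))%C.
Proof.
  intros Hs.
  assert (Hs' : RtoC s <> 0%C) by (intros E; apply Hs; now injection E).
  assert (Hsd : RtoC (s ^ S (S m)) <> 0%C)
    by (intros E; apply (pow_nonzero s (S (S m)) Hs); now injection E).
  rewrite (RtoC_inv (s ^ S (S m))) by (now apply pow_nonzero).
  apply Cmult_eq_inv_l; [exact Hsd|].
  replace (RtoC (/ s) * (P * y))%C with (P * y / RtoC s)%C by (rewrite RtoC_inv by auto; unfold Cdiv; ring).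
  rewrite scaled_cpoly_spec by auto.
  change (scaled_cpoly alpha (S (S m)) s (P * y))
    with (RtoC s * scaled_cpoly alpha (S m) s (P * y) + alpha (S (S m)) * (P * y) ^ S (S m))%C.
  unfold lower_terms. rewrite (Cpow_mult_l P y (S (S m))).
  replace (alpha (S (S m)) * (P ^ S (S m) * y ^ S (S m)))%C
    with (alpha (S (S m)) * P ^ S (S m) * y ^ S (S m))%C by ring.
  rewrite leading_direction.
  replace (P * (RtoC a * y ^ S (S m) + RtoC s * (Cconj P * scaled_cpoly alpha (S m) s (P * y))))%C
    with ((P * Cconj P) * RtoC s * scaled_cpoly alpha (S m) s (P * y) + RtoC a * P * y ^ S (S m))%C
    by ring.
  rewrite Cconj_mult_r_unit by auto. ring.
Qed.

Section Local_solution.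

Variables rho eps Ls : R.
Hypothesis rho_range : 0 < rho <= 1/2.
Hypothesis eps_range : 0 < eps <= 1.
Hypothesis Ls_ge0 : 0 <= Ls.
Hypothesis G_contract : forall s u u', Cmod u <= rho -> Cmod u' <= rho ->
  Cmod (profile_G eps s u - profile_G eps s u') <= 1/4 * Cmod (u - u').
Hypothesis G_lipschitz_time : forall s s' u, Cmod u <= rho ->
  Cmod (profile_G eps s u - profile_G eps s' u) <= Ls * Rabs (s - s').
Variable mu : R -> C.
Hypothesis mu_ball : lip_ball rho Ls mu.
Hypothesis mu_fixed : forall s, mu s = picard_op m (profile_G eps) mu s.

Definition blowup_start : R := - (eps ^ S m / (INR (S m) * a)).

Definition blowup_solution (t : R) : C :=
  (RtoC (/ sigma (S m) a t) * (P * (1 + mu (sigma (S m) a t))))%C.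

Lemma blowup_start_neg : blowup_start < 0.
Proof.
  unfold blowup_start. assert (0 < INR (S m)) by (apply lt_0_INR; lia).
  assert (0 < eps ^ S m) by (apply pow_lt; lra).
  assert (0 < eps ^ S m / (INR (S m) * a)) by (apply Rdiv_lt_0_compat; nra). lra.
Qed.

Lemma sigma_range (t : R) : blowup_start < t < 0 -> 0 < sigma (S m) a t < eps.
Proof.
  intros Ht. split; [apply sigma_pos|]. apply sigma_lt; try lia; try lra.
  unfold blowup_start in Ht. assert (0 < INR (S m)) by (apply lt_0_INR; lia).
  apply Rmult_lt_reg_r with (/ (INR (S m) * a)); [apply Rinv_0_lt_compat; nra|].
  replace (INR (S m) * a * - t * / (INR (S m) * a)) with (- t) by (field; lra). unfold Rdiv in Ht. lra.
Qed.

Lemma blowup_solution_derive (t : R) : blowup_start < t < 0 ->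
  has_Cderive blowup_solution t (cpoly alpha (S (S m)) (blowup_solution t)).
Proof.
  intros Ht. destruct (sigma_range t Ht) as [Hs1 Hs2]. set (s := sigma (S m) a t) in *.
  assert (Hs : s <> 0) by lra.
  destruct (fixed_point_derive m (profile_G eps) rho Ls G_contract G_lipschitz_time mu mu_ball mu_fixed
              s Hs1)
    as [dmu [Dmu Emu]].
  pose proof (sigma_derive (S m) a ltac:(lia) a_pos t (proj2 Ht)) as Dsigma. fold s in Dsigma.
  set (ds := - a * s / s ^ S m) in Dsigma.
  assert (Dinv : derivable_pt_lim (fun x => / sigma (S m) a x) t (- ds / s ^ 2))
    by (apply is_derive_Reals, is_derive_inv; [now apply is_derive_Reals | exact Hs]).
  assert (D : has_Cderive blowup_solution t
                (RtoC (- ds / s ^ 2) * (P * (1 + mu s)) + RtoC (/ s) * (P * (RtoC ds * dmu)))%C).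
  { apply (has_Cderive_RtoC_mult (fun x => / sigma (S m) a x) (fun x => P * (1 + mu (sigma (S m) a x)))%C);
      [exact Dinv|].
    apply (has_Cderive_Cmult_l P (fun x => 1 + mu (sigma (S m) a x))%C).
    apply (has_Cderive_add_const 1 (fun x => mu (sigma (S m) a x))).
    now apply has_Cderive_comp. }
  eapply has_Cderive_eq; [reflexivity | | exact D].
  unfold blowup_solution. fold s. rewrite cpoly_blowup by exact Hs.
  assert (HG : profile_G eps s (mu s) = profile_rhs s (1 + mu s)%C)
    by (unfold profile_G; now rewrite clamp_id by lra).
  rewrite HG in Emu. unfold profile_rhs in Emu.
  set (y := (1 + mu s)%C) in *. set (Y := (y ^ S (S m))%C) in *. set (w := lower_terms s y) in *.
  assert (Edmu : dmu = (RtoC (/ s) * (y - Y - RtoC (s / a) * w))%C).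
  { apply Cmult_eq_inv_l in Emu; [|intros E; apply Hs; now injection E].
    rewrite Emu, RtoC_inv by exact Hs. unfold y. rewrite !S_INR, !RtoC_plus. ring. }
  rewrite Edmu. clearbody y Y w. unfold ds.
  assert (s ^ m <> 0) by (apply pow_nonzero; lra).
  destruct P as [p1 p2], y as [y1 y2], Y as [Y1 Y2], w as [w1 w2].
  apply C_pair_eq; simpl; field; lra.
Qed.

Lemma profile_near_1 (t : R) : blowup_start < t < 0 ->
  1/2 <= Cmod (1 + mu (sigma (S m) a t))%C /\
  Cmod ((1 + mu (sigma (S m) a t)) - 1)%C <= 4 * Ls * sigma (S m) a t.
Proof.
  intros Ht. pose proof (sigma_range t Ht). set (s := sigma (S m) a t) in *.
  replace ((1 + mu s) - 1)%C with (mu s) by ring.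
  pose proof (proj1 mu_ball s).
  pose proof (Cmod_sub_rev (1 + mu s)%C (RtoC 1)) as Hrev.
  replace ((1 + mu s) - 1)%C with (mu s) in Hrev by ring. rewrite Cmod_1 in Hrev.
  split; [unfold Rabs in Hrev; destruct Rcase_abs in Hrev; lra|].
  apply (fixed_point_small m (profile_G eps) rho Ls (proj1 rho_range) G_contract G_lipschitz_time
           mu mu_ball mu_fixed);
    [apply profile_G_at_0 | ]; lra.
Qed.

Lemma blowup_solution_norm (t : R) : blowup_start < t < 0 ->
  Cmod (blowup_solution t) = Cmod (1 + mu (sigma (S m) a t))%C / sigma (S m) a t.
Proof.
  intros Ht. pose proof (sigma_range t Ht). unfold blowup_solution.
  rewrite Cmod_RtoC_mult, Cmod_unit_mult by auto.
  rewrite Rabs_right by (apply Rle_ge; left; apply Rinv_0_lt_compat; lra). unfold Rdiv. ring.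
Qed.

Lemma blowup_solution_unbounded (M : R) : exists delta, delta > 0 /\
  forall t, blowup_start < t < 0 -> - delta < t -> Cmod (blowup_solution t) > M.
Proof.
  pose proof (Rabs_pos M). pose proof (Rle_abs M).
  destruct (sigma_small (S m) a ltac:(lia) a_pos (1 / (2 * (Rabs M + 1)))) as [d [Hd Hsmall]];
    [apply Rdiv_lt_0_compat; lra|].
  exists d. split; auto. intros t Ht Htd.
  rewrite blowup_solution_norm by auto. destruct (profile_near_1 t Ht) as [Hy _].
  pose proof (sigma_range t Ht). specialize (Hsmall t ltac:(lra)).
  set (s := sigma (S m) a t) in *.
  assert (s * (2 * (Rabs M + 1)) < 1).
  { apply Rmult_lt_reg_r with (/ (2 * (Rabs M + 1))); [apply Rinv_0_lt_compat; lra|].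
    replace (s * (2 * (Rabs M + 1)) * / (2 * (Rabs M + 1))) with s by (field; lra). lra. }
  apply Rlt_gt, Rmult_lt_reg_r with s; [lra|].
  unfold Rdiv. rewrite Rmult_assoc, Rinv_l by lra. nra.
Qed.

Lemma blowup_solution_direction (e : R) : e > 0 -> exists delta, delta > 0 /\
  forall t, blowup_start < t < 0 -> - delta < t ->
  cnorm (fst (blowup_solution t) / cnorm (blowup_solution t) - fst P,
         snd (blowup_solution t) / cnorm (blowup_solution t) - snd P) < e.
Proof.
  intros He. assert (HLs : 0 <= 4 * Ls) by lra.
  destruct (sigma_small (S m) a ltac:(lia) a_pos (e / (4 * (4 * Ls) + 1))) as [d [Hd Hsmall]];
    [apply Rdiv_lt_0_compat; lra|].
  exists d. split; auto. intros t Ht Htd. change cnorm with Cmod.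
  pose proof (blowup_solution_norm t Ht) as Hnorm. destruct (profile_near_1 t Ht) as [Y1 Y2].
  pose proof (sigma_range t Ht). specialize (Hsmall t ltac:(lra)).
  set (s := sigma (S m) a t) in *. set (y := (1 + mu s)%C) in *.
  assert (Ez : blowup_solution t = (RtoC (/ s) * (P * y))%C) by reflexivity.
  set (c := Cmod (blowup_solution t)) in *.
  assert (Hc : 0 < c) by (rewrite Hnorm; apply Rdiv_lt_0_compat; lra).
  assert (Ep : (fst (blowup_solution t) / c - fst P, snd (blowup_solution t) / c - snd P)
               = (P * (RtoC (/ Cmod y) * y - 1))%C).
  { rewrite Ez, Hnorm. destruct P as [p1 p2], y as [y1 y2]. apply C_pair_eq; simpl; field; lra. }
  rewrite Ep, Cmod_unit_mult by auto.
  replace (RtoC (/ Cmod y) * y - 1)%C with (RtoC (/ Cmod y) * (y - RtoC (Cmod y)))%C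
    by (rewrite RtoC_inv by lra; field; intros Q; injection Q; lra).
  rewrite Cmod_RtoC_mult, Rabs_right by (apply Rle_ge; left; apply Rinv_0_lt_compat; lra).
  assert (Cmod (y - RtoC (Cmod y)) <= 2 * (4 * Ls * s)).
  { eapply Rle_trans; [apply (Cmod_sub_triangle _ (RtoC 1))|].
    rewrite <- RtoC_minus, Cmod_R. pose proof (Cmod_sub_rev y (RtoC 1)) as Hrev.
    rewrite Cmod_1 in Hrev. rewrite Rabs_minus_sym. lra. }
  assert (Hinv : / Cmod y <= 2) by (replace 2 with (/ (1/2)) by field; apply Rinv_le_contravar; lra).
  assert (s * (4 * (4 * Ls) + 1) < e).
  { apply Rmult_lt_reg_r with (/ (4 * (4 * Ls) + 1)); [apply Rinv_0_lt_compat; lra|].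
    replace (s * (4 * (4 * Ls) + 1) * / (4 * (4 * Ls) + 1)) with s by (field; lra).
    unfold Rdiv in Hsmall. lra. }
  pose proof (Cmod_ge_0 (y - RtoC (Cmod y))).
  assert (/ Cmod y * Cmod (y - RtoC (Cmod y)) <= 2 * (2 * (4 * Ls * s)))
    by (apply Rmult_le_compat; auto; left; apply Rinv_0_lt_compat; lra).
  lra.
Qed.

End Local_solution.

Theorem local_blowup_solution : exists T0 (z : R -> C), T0 < 0 /\
  (forall t, T0 < t < 0 -> has_Cderive z t (cpoly alpha (S (S m)) (z t))) /\
  (forall M, exists delta, delta > 0 /\ forall t, T0 < t < 0 -> - delta < t -> Cmod (z t) > M) /\
  (forall e, e > 0 -> exists delta, delta > 0 /\ forall t, T0 < t < 0 -> - delta < t ->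
     cnorm (fst (z t) / cnorm (z t) - fst P, snd (z t) / cnorm (z t) - snd P) < e).
Proof.
  destruct profile_constants as [rho [eps [Ls [Hrho [Heps [HLs [Hcontract [Hlip Hsmall]]]]]]]].
  destruct (picard_fixed_point m (profile_G eps) rho Ls (proj1 Hrho) HLs Hcontract Hlip Hsmall)
    as [mu [Hball Hfixed]].
  exists (blowup_start eps), (blowup_solution mu). split; [apply blowup_start_neg; lra|].
  split; [|split].
  - now apply (blowup_solution_derive rho eps Ls).
  - now apply (blowup_solution_unbounded rho eps Ls).
  - now apply (blowup_solution_direction rho eps Ls).
Qed.

End Profile.

(** * Uniqueness and maximal extension *)

Definition solves (F : C -> C) (lo hi : option R) (z : R -> C) : Prop :=
  forall t, in_int lo hi t -> has_Cderive z t (F (z t)).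

Lemma solves_sub (F : C -> C) (lo hi lo' hi' : option R) (z : R -> C) :
  solves F lo hi z -> (forall t, in_int lo' hi' t -> in_int lo hi t) -> solves F lo' hi' z.
Proof. intros H Hsub t Ht. now apply H, Hsub. Qed.

Lemma in_int_between (lo hi : option R) (x y c : R) :
  in_int lo hi x -> in_int lo hi y -> x <= c <= y -> in_int lo hi c.
Proof. unfold in_int. destruct lo, hi; intuition lra. Qed.

Lemma in_int_open (lo hi : option R) (t : R) : in_int lo hi t ->
  exists d, 0 < d /\ forall s, t - d < s < t + d -> in_int lo hi s.
Proof.
  unfold in_int. intros [H1 H2]. destruct lo as [l|], hi as [h|].
  - exists (Rmin (t - l) (h - t)). split; [apply Rmin_glb_lt; lra|].
    intros s Hs. pose proof (Rmin_l (t - l) (h - t)). pose proof (Rmin_r (t - l) (h - t)). lra.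
  - exists (t - l). split; [lra|]. intros; split; auto; lra.
  - exists (h - t). split; [lra|]. intros; split; auto; lra.
  - exists 1. split; [lra|]. intros; split; auto.
Qed.

Definition lower_max (l1 l2 : option R) : option R :=
  match l1, l2 with
  | Some a, Some b => Some (Rmax a b)
  | Some a, None | None, Some a => Some a
  | None, None => None
  end.

Lemma in_int_lower_max (l1 l2 hi : option R) (t : R) :
  in_int (lower_max l1 l2) hi t <-> in_int l1 hi t /\ in_int l2 hi t.
Proof. unfold in_int, lower_max. destruct l1, l2, hi; unfold Rmax; try destruct Rle_dec; intuition lra. Qed.

Lemma continuous_bounded (f : R -> R) (a b : R) : a <= b ->
  (forall c, a <= c <= b -> continuity_pt f c) -> exists B, forall c, a <= c <= b -> Rabs (f c) <= B.
Proof.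
  intros Hab Hc. destruct (continuity_ab_maj f a b Hab Hc) as [M [HM _]].
  destruct (continuity_ab_min f a b Hab Hc) as [N [HN _]].
  exists (Rabs (f M) + Rabs (f N)). intros c Hc'. specialize (HM c Hc'). specialize (HN c Hc').
  unfold Rabs in *. repeat destruct Rcase_abs; lra.
Qed.

Lemma derive_nonpos_le (g dg : R -> R) (a b : R) : a <= b ->
  (forall x, a <= x <= b -> derivable_pt_lim g x (dg x)) -> (forall x, a <= x <= b -> dg x <= 0) ->
  g b <= g a.
Proof.
  intros Hab Hg Hdg. destruct (Req_dec a b) as [<-|Hne]; [lra|].
  destruct (MVT_cor2 g dg a b ltac:(lra) Hg) as [c [Hc Hin]].
  pose proof (Hdg c ltac:(lra)). nra.
Qed.

Lemma gronwall_vanish (D dD : R -> R) (K t0 t : R) :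
  (forall x, Rmin t0 t <= x <= Rmax t0 t -> derivable_pt_lim D x (dD x)) ->
  (forall x, Rmin t0 t <= x <= Rmax t0 t -> Rabs (dD x) <= K * D x) ->
  (forall x, 0 <= D x) -> D t0 = 0 -> D t = 0.
Proof.
  intros HD Hbound Hpos H0. apply Rle_antisym; [|apply Hpos].
  destruct (Rle_dec t0 t) as [Hle|Hlt].
  - rewrite Rmin_left, Rmax_right in * by lra.
    assert (Hg := derive_nonpos_le (fun s => D s * exp (- K * s))
                    (fun s => dD s * exp (- K * s) + D s * (exp (- K * s) * - K)) t0 t Hle).
    cbv beta in Hg. rewrite H0, Rmult_0_l in Hg. pose proof (exp_pos (- K * t)).
    enough (D t * exp (- K * t) <= 0) by nra.
    apply Hg; intros x Hx.
    + apply (derivable_pt_lim_mult D (fun s => exp (- K * s)));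
        [now apply HD | apply derivable_pt_lim_exp_scal].
    + pose proof (Hbound x Hx). pose proof (Rle_abs (dD x)). pose proof (exp_pos (- K * x)).
      replace (dD x * exp (- K * x) + D x * (exp (- K * x) * - K)) with ((dD x - K * D x) * exp (- K * x))
        by ring. apply Rmult_le_0_r; lra.
  - rewrite Rmin_right, Rmax_left in * by lra.
    assert (Hg := derive_nonpos_le (fun s => - (D s * exp (K * s)))
                    (fun s => - (dD s * exp (K * s) + D s * (exp (K * s) * K))) t t0 ltac:(lra)).
    cbv beta in Hg. rewrite H0, Rmult_0_l in Hg. pose proof (exp_pos (K * t)).
    enough (- 0 <= - (D t * exp (K * t))) by nra.
    apply Hg; intros x Hx.
    + apply (derivable_pt_lim_opp (fun s => D s * exp (K * s))).
      apply (derivable_pt_lim_mult D (fun s => exp (K * s)));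
        [now apply HD | apply derivable_pt_lim_exp_scal].
    + pose proof (Hbound x Hx). pose proof (Rle_abs (- dD x)). rewrite Rabs_Ropp in *.
      pose proof (exp_pos (K * x)).
      replace (- (dD x * exp (K * x) + D x * (exp (K * x) * K))) with (- ((dD x + K * D x) * exp (K * x)))
        by ring. enough (0 <= (dD x + K * D x) * exp (K * x)) by lra. apply Rmult_le_pos; lra.
Qed.

Lemma solution_bounded (F : C -> C) (lo hi : option R) (w : R -> C) (a b : R) :
  solves F lo hi w -> a <= b -> (forall c, a <= c <= b -> in_int lo hi c) ->
  exists X, 0 <= X /\ forall c, a <= c <= b -> Cmod (w c) <= X.
Proof.
  intros Hw Hab Hin.
  destruct (continuous_bounded (fun s => fst (w s)) a b Hab) as [B1 HB1].
  { intros c Hc. eapply derivable_pt_lim_continuity_pt, (Hw c (Hin c Hc)). }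
  destruct (continuous_bounded (fun s => snd (w s)) a b Hab) as [B2 HB2].
  { intros c Hc. eapply derivable_pt_lim_continuity_pt, (Hw c (Hin c Hc)). }
  exists (Rabs B1 + Rabs B2). split; [pose proof (Rabs_pos B1); pose proof (Rabs_pos B2); lra|].
  intros c Hc. eapply Rle_trans; [apply Cmod_le_abs_sum|].
  pose proof (HB1 c Hc). pose proof (HB2 c Hc). pose proof (Rle_abs B1). pose proof (Rle_abs B2).
  simpl in *. lra.
Qed.

Lemma Rabs_inner_le_Cmod (z g : C) : Rabs (fst z * fst g + snd z * snd g) <= 2 * (Cmod z * Cmod g).
Proof.
  eapply Rle_trans; [apply Rabs_triang|]. rewrite !Rabs_mult.
  pose proof (Cmod_fst_le z). pose proof (Cmod_snd_le z).
  pose proof (Cmod_fst_le g). pose proof (Cmod_snd_le g).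
  assert (Rabs (fst z) * Rabs (fst g) <= Cmod z * Cmod g) by (apply Rmult_le_compat; auto; apply Rabs_pos).
  assert (Rabs (snd z) * Rabs (snd g) <= Cmod z * Cmod g) by (apply Rmult_le_compat; auto; apply Rabs_pos).
  lra.
Qed.

Lemma solution_unique (F : C -> C) (lo hi : option R) (w1 w2 : R -> C) :
  locally_lipschitz F -> solves F lo hi w1 -> solves F lo hi w2 ->
  forall t0, in_int lo hi t0 -> w1 t0 = w2 t0 -> forall t, in_int lo hi t -> w1 t = w2 t.
Proof.
  intros HF S1 S2 t0 H0 E0 t Ht.
  set (a := Rmin t0 t). set (b := Rmax t0 t).
  assert (Hab : a <= b) by (unfold a, b, Rmin, Rmax; destruct Rle_dec; lra).
  assert (Hin : forall c, a <= c <= b -> in_int lo hi c).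
  { intros c Hc. unfold a, b, Rmin, Rmax in Hc. destruct Rle_dec.
    - now apply (in_int_between lo hi t0 t). - apply (in_int_between lo hi t t0); auto; lra. }
  destruct (solution_bounded F lo hi w1 a b S1 Hab Hin) as [X1 [HX1 Hw1]].
  destruct (solution_bounded F lo hi w2 a b S2 Hab Hin) as [X2 [HX2 Hw2]].
  destruct (HF (X1 + X2) ltac:(lra)) as [L [HL HLip]].
  set (D := fun s => (fst (w1 s) - fst (w2 s)) ^ 2 + (snd (w1 s) - snd (w2 s)) ^ 2).
  set (dF := fun s => (F (w1 s) - F (w2 s))%C).
  set (dD := fun s =>
    2 * ((fst (w1 s) - fst (w2 s)) * fst (dF s) + (snd (w1 s) - snd (w2 s)) * snd (dF s))).
  assert (ED : forall s, D s = Cmod (w1 s - w2 s) ^ 2) by (intros s; rewrite Cmod_sq; reflexivity).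
  assert (DD : forall c, a <= c <= b -> derivable_pt_lim D c (dD c)).
  { intros c Hc. destruct (S1 c (Hin c Hc)) as [A1 A2]. destruct (S2 c (Hin c Hc)) as [A3 A4].
    set (u := fun s => fst (w1 s) - fst (w2 s)). set (v := fun s => snd (w1 s) - snd (w2 s)).
    assert (Du : derivable_pt_lim u c (fst (dF c)))
      by exact (derivable_pt_lim_minus (fun s => fst (w1 s)) (fun s => fst (w2 s)) c _ _ A1 A3).
    assert (Dv : derivable_pt_lim v c (snd (dF c)))
      by exact (derivable_pt_lim_minus (fun s => snd (w1 s)) (fun s => snd (w2 s)) c _ _ A2 A4).
    apply derivable_pt_lim_eq with (fun s => u s * u s + v s * v s)
      (fst (dF c) * u c + u c * fst (dF c) + (snd (dF c) * v c + v c * snd (dF c)));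
      [intros; unfold D, u, v; ring | unfold dD, u, v; ring |].
    apply (derivable_pt_lim_plus (fun s => u s * u s) (fun s => v s * v s));
      apply derivable_pt_lim_mult; assumption. }
  assert (Hbound : forall c, a <= c <= b -> Rabs (dD c) <= 4 * L * D c).
  { intros c Hc. rewrite ED. unfold dD. rewrite Rabs_mult, Rabs_right by lra.
    assert (Hlip : Cmod (dF c) <= L * Cmod (w1 c - w2 c))
      by (apply HLip; [pose proof (Hw1 c Hc) | pose proof (Hw2 c Hc)]; lra).
    pose proof (Rabs_inner_le_Cmod (w1 c - w2 c) (dF c)). simpl in *.
    pose proof (Cmod_ge_0 (w1 c - w2 c)). pose proof (Cmod_ge_0 (dF c)).
    assert (Cmod (w1 c - w2 c) * Cmod (dF c) <= Cmod (w1 c - w2 c) * (L * Cmod (w1 c - w2 c)))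
      by (apply Rmult_le_compat_l; auto).
    change (fst (w1 c) + - fst (w2 c)) with (fst (w1 c) - fst (w2 c)) in *.
    change (snd (w1 c) + - snd (w2 c)) with (snd (w1 c) - snd (w2 c)) in *. nra. }
  assert (HDt : D t = 0).
  { apply (gronwall_vanish D dD (4 * L) t0 t DD Hbound); [intros s; rewrite ED; apply pow2_ge_0|].
    unfold D. rewrite E0. ring. }
  rewrite ED in HDt. pose proof (Cmod_ge_0 (w1 t - w2 t)).
  assert (HDt' : Cmod (w1 t - w2 t) = 0) by nra. apply Cmod_eq_0 in HDt'.
  replace (w1 t) with ((w1 t - w2 t) + w2 t)%C by ring. rewrite HDt'. ring.
Qed.

Lemma continuity_pt_locally_bounded (f : R -> R) (x : R) : continuity_pt f x ->
  exists d, 0 < d /\ forall y, Rabs (y - x) < d -> Rabs (f y) <= Rabs (f x) + 1.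
Proof.
  intros H. destruct (H 1 ltac:(lra)) as [d [Hd Hy]]. exists d. split; auto. intros y Hyx.
  destruct (Req_dec y x) as [->|Hne]; [lra|].
  assert (Rabs (f y - f x) < 1)
    by (apply (Hy y); split; [split; [exact I | auto] | exact Hyx]).
  pose proof (Rabs_triang_inv (f y) (f x)). lra.
Qed.

(* The solution found near the blow-up time [0] extends to the left as far as possible: the lower end
   is the infimum of the left ends of all extensions, which agree by uniqueness. *)
Section Maximal_extension.

Variable F : C -> C.
Hypothesis F_lipschitz : locally_lipschitz F.
Variable T0 : R.
Variable z0 : R -> C.
Hypothesis T0_neg : T0 < 0.
Hypothesis z0_solves : solves F (Some T0) (Some 0) z0.
Hypothesis z0_unbounded : forall M, exists delta, delta > 0 /\
  forall t, T0 < t < 0 -> - delta < t -> Cmod (z0 t) > M.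

Definition extension (lo : option R) (w : R -> C) : Prop :=
  solves F lo (Some 0) w /\ forall t, T0 < t < 0 -> in_int lo (Some 0) t /\ w t = z0 t.

Definition reachable (t : R) : Prop := exists lo w, extension lo w /\ in_int lo (Some 0) t.

Lemma extension_z0 : extension (Some T0) z0.
Proof. split; [exact z0_solves|]. intros t Ht. split; [unfold in_int; lra | reflexivity]. Qed.

Lemma extensions_agree (lo1 lo2 : option R) (w1 w2 : R -> C) : extension lo1 w1 -> extension lo2 w2 ->
  forall t, in_int lo1 (Some 0) t -> in_int lo2 (Some 0) t -> w1 t = w2 t.
Proof.
  intros [S1 E1] [S2 E2] t H1 H2. assert (Hmid : T0 < T0 / 2 < 0) by lra.
  apply (solution_unique F (lower_max lo1 lo2) (Some 0) w1 w2 F_lipschitz) with (t0 := T0 / 2).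
  - eapply solves_sub; [exact S1|]. intros s Hs. apply in_int_lower_max in Hs. tauto.
  - eapply solves_sub; [exact S2|]. intros s Hs. apply in_int_lower_max in Hs. tauto.
  - apply in_int_lower_max. split; [apply E1 | apply E2]; auto.
  - now rewrite (proj2 (E1 _ Hmid)), (proj2 (E2 _ Hmid)).
  - now apply in_int_lower_max.
Qed.

Lemma reachable_up (t t' : R) : reachable t -> t <= t' < 0 -> reachable t'.
Proof.
  intros [lo [w [G H]]] Ht. exists lo, w. split; auto.
  unfold in_int in *. destruct lo; split; try tauto; lra.
Qed.

Lemma reachable_below (t : R) : reachable t -> exists t', t' < t /\ reachable t'.
Proof.
  intros [lo [w [G H]]]. destruct (in_int_open lo (Some 0) t H) as [e [He Hn]].
  exists (t - e / 2). split; [lra|]. exists lo, w. split; auto. apply Hn. lra.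
Qed.

Definition lower_end : option R :=
  match Glb_Rbar reachable with Finite l => Some l | _ => None end.

Lemma in_lower_end (t : R) : in_int lower_end (Some 0) t <-> reachable t.
Proof.
  assert (Hmid : reachable (T0 / 2))
    by (exists (Some T0), z0; split; [apply extension_z0 | unfold in_int; lra]).
  assert (Hup : forall t, t < 0 -> ~ reachable t -> forall x, reachable x -> t <= x).
  { intros t' Ht' Hn x Hx. destruct (Rle_dec t' x) as [|Hgt]; auto. exfalso. apply Hn.
    apply (reachable_up x); auto. lra. }
  assert (Hneg : forall t, reachable t -> t < 0) by (intros t' [lo [w [_ [_ H]]]]; exact H).
  destruct (Glb_Rbar_correct reachable) as [Hlb Hglb].
  unfold lower_end, in_int. destruct (Glb_Rbar reachable) as [l| |] eqn:El; split.
  - intros [Hl Ht]. apply NNPP. intros Hn. specialize (Hglb t (Hup t Ht Hn)). simpl in Hglb. lra.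
  - intros Hr. split; [|now apply Hneg]. destruct (reachable_below t Hr) as [t' [Ht' Hr']].
    specialize (Hlb t' Hr'). simpl in Hlb. lra.
  - intros _. exfalso. exact (Hlb _ Hmid).
  - intros _. exfalso. exact (Hlb _ Hmid).
  - intros [_ Ht]. apply NNPP. intros Hn. exact (Hglb t (Hup t Ht Hn)).
  - intros Hr. split; [exact I | now apply Hneg].
Qed.

Definition maximal_extension (t : R) : C :=
  match excluded_middle_informative (reachable t) with
  | left H => snd (proj1_sig (constructive_indefinite_description
      (fun p : option R * (R -> C) => extension (fst p) (snd p) /\ in_int (fst p) (Some 0) t)
      (let (lo, Hw) := H in let (w, Hg) := Hw in ex_intro _ (lo, w) Hg))) t
  | right _ => z0 t
  end.

Lemma maximal_extension_eq (t : R) (lo : option R) (w : R -> C) :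
  extension lo w -> in_int lo (Some 0) t -> maximal_extension t = w t.
Proof.
  intros G H. unfold maximal_extension. destruct excluded_middle_informative as [HG|HG].
  - destruct constructive_indefinite_description as [[lo' w'] [G' H']]. simpl.
    now apply (extensions_agree lo' lo w' w).
  - exfalso. apply HG. now exists lo, w.
Qed.

Lemma maximal_extension_extends (t : R) :
  T0 < t < 0 -> in_int lower_end (Some 0) t /\ maximal_extension t = z0 t.
Proof.
  intros Ht. assert (Hin : in_int (Some T0) (Some 0) t) by (unfold in_int; lra). split.
  - apply in_lower_end. exists (Some T0), z0. split; auto. apply extension_z0.
  - apply maximal_extension_eq with (Some T0); auto. apply extension_z0.
Qed.

Lemma maximal_extension_solves : solves F lower_end (Some 0) maximal_extension.
Proof.
  intros t Ht. apply in_lower_end in Ht. destruct Ht as [lo [w [G Hin]]].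
  destruct (in_int_open lo (Some 0) t Hin) as [e [He Hn]].
  assert (Eq : forall s, t - e < s < t + e -> w s = maximal_extension s)
    by (intros s Hs; symmetry; apply (maximal_extension_eq s lo w G); auto).
  destruct (proj1 G t Hin) as [D1 D2]. rewrite <- (Eq t) by lra.
  split; apply is_derive_Reals; apply is_derive_Reals in D1, D2; eapply is_derive_ext_loc; eauto;
    exists (mkposreal e He); intros s Hs; unfold ball in Hs; simpl in Hs;
    unfold AbsRing_ball, abs, minus, plus, opp in Hs; simpl in Hs; apply Rabs_def2 in Hs;
    now rewrite Eq by lra.
Qed.

Lemma solution_excludes_blowup (lo hi : option R) (w : R -> C) : solves F lo hi w ->
  (forall t, T0 < t < 0 -> in_int lo hi t /\ w t = z0 t) -> ~ in_int lo hi 0.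
Proof.
  intros Sw Hw H0. destruct (Sw 0 H0) as [A1 A2].
  destruct (continuity_pt_locally_bounded _ _ (derivable_pt_lim_continuity_pt _ _ _ A1)) as [d1 [Hd1 B1]].
  destruct (continuity_pt_locally_bounded _ _ (derivable_pt_lim_continuity_pt _ _ _ A2)) as [d2 [Hd2 B2]].
  destruct (z0_unbounded (Rabs (fst (w 0)) + Rabs (snd (w 0)) + 2)) as [d3 [Hd3 B3]].
  set (d := Rmin (Rmin d1 d2) (Rmin d3 (- T0))).
  assert (0 < d) by (unfold d; repeat apply Rmin_glb_lt; lra).
  assert (d <= Rmin d1 d2 /\ d <= Rmin d3 (- T0)) by (split; [apply Rmin_l | apply Rmin_r]).
  pose proof (Rmin_l d1 d2). pose proof (Rmin_r d1 d2).
  pose proof (Rmin_l d3 (- T0)). pose proof (Rmin_r d3 (- T0)).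
  set (s := - d / 2). assert (Hs : T0 < s < 0) by (unfold s; lra).
  specialize (B3 s Hs ltac:(unfold s; lra)). rewrite <- (proj2 (Hw s Hs)) in B3.
  assert (Rabs (s - 0) < d1 /\ Rabs (s - 0) < d2) by (rewrite Rminus_0_r, Rabs_left by lra; unfold s; lra).
  pose proof (B1 s ltac:(lra)). pose proof (B2 s ltac:(lra)). pose proof (Cmod_le_abs_sum (w s)).
  simpl in *. lra.
Qed.

Theorem maximal_extension_maximal : exists lo z, maximal_solution F lo (Some 0) z /\
  forall t, T0 < t < 0 -> in_int lo (Some 0) t /\ z t = z0 t.
Proof.
  exists lower_end, maximal_extension. split; [|exact maximal_extension_extends]. split.
  - split; [exists (T0 / 2); apply maximal_extension_extends; lra | exact maximal_extension_solves].
  - intros lo hi w [_ Sw] Hsub Heq.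
    assert (Hw : forall t, T0 < t < 0 -> in_int lo hi t /\ w t = z0 t).
    { intros t Ht. destruct (maximal_extension_extends t Ht) as [Hin Hz].
      split; [now apply Hsub | now rewrite Heq]. }
    pose proof (solution_excludes_blowup lo hi w Sw Hw) as H0.
    assert (Hneg : forall t, in_int lo hi t -> t < 0).
    { intros t Ht. destruct (Rlt_dec t 0) as [|Hge]; auto. exfalso. apply H0.
      apply (in_int_between lo hi (T0 / 2) t); [apply Hw; lra | exact Ht | lra]. }
    assert (Hext : extension lo w).
    { split.
      - eapply solves_sub; [exact Sw|]. intros t [Ht1 Ht2]. split; auto.
        destruct hi as [h|]; [|exact I]. simpl. destruct (Rlt_dec t h) as [|Hge]; auto. exfalso.
        assert (Hh : in_int lo (Some h) (Rmax T0 h / 2)).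
        { apply Hw. pose proof (Rmax_l T0 h). pose proof (Rmax_r T0 h).
          assert (Rmax T0 h < 0) by (apply Rmax_lub_lt; lra). lra. }
        destruct Hh as [_ Hh]. simpl in Hh. pose proof (Rmax_r T0 h). lra.
      - intros t Ht. destruct (Hw t Ht) as [[Hlo _] Hz].
        split; [split; [exact Hlo | simpl; lra] | exact Hz]. }
    intros t Ht. apply in_lower_end. exists lo, w. split; auto.
    split; [exact (proj1 Ht) | now apply Hneg].
Qed.

End Maximal_extension.

(** * Time reversal and the theorem *)

Lemma diverges_left_of_local (lo : option R) (T0 : R) (z z0 : R -> C) (p : C) : T0 < 0 ->
  (forall t, T0 < t < 0 -> z t = z0 t) ->
  (forall M, exists delta, delta > 0 /\ forall t, T0 < t < 0 -> - delta < t -> Cmod (z0 t) > M) ->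
  (forall e, e > 0 -> exists delta, delta > 0 /\ forall t, T0 < t < 0 -> - delta < t ->
     cnorm (fst (z0 t) / cnorm (z0 t) - fst p, snd (z0 t) / cnorm (z0 t) - snd p) < e) ->
  diverges_left_of lo 0 z p.
Proof.
  intros HT0 Hz Hbig Hdir.
  assert (Hnear : forall (Q : R -> Prop) delta, delta > 0 -> (forall t, T0 < t < 0 -> - delta < t -> Q t) ->
            exists delta', delta' > 0 /\ forall t, in_int lo (Some 0) t -> 0 - delta' < t -> Q t).
  { intros Q d Hd HQ. exists (Rmin d (- T0)). split; [apply Rmin_glb_lt; lra|].
    intros t [_ Ht] Htd. pose proof (Rmin_l d (- T0)). pose proof (Rmin_r d (- T0)). simpl in Ht.
    apply HQ; lra. }
  split.
  - intros M. destruct (Hbig M) as [d [Hd HQ]]. apply (Hnear _ d Hd). intros t Ht Htd.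
    rewrite Hz by exact Ht. now apply HQ.
  - intros e He. destruct (Hdir e He) as [d [Hd HQ]]. apply (Hnear _ d Hd). intros t Ht Htd.
    rewrite Hz by exact Ht. now apply HQ.
Qed.

Lemma positive_separatrix (alpha : nat -> C) (d : nat) (p1 p2 a : R) : (2 <= d)%nat ->
  cnorm (p1, p2) = 1 -> Pd alpha d p1 p2 = a * p1 -> Qd alpha d p1 p2 = a * p2 -> a > 0 ->
  exists lo tmax z,
    maximal_solution (cpoly alpha d) lo (Some tmax) z /\ diverges_left_of lo tmax z (p1, p2).
Proof.
  intros Hd Hnorm HP HQ Ha.
  destruct d as [|[|m]]; [lia | lia|].
  assert (Hlead : (alpha (S (S m)) * (p1, p2) ^ S (S m) = RtoC a * (p1, p2))%C)
    by (apply C_pair_eq; [change (Pd alpha (S (S m)) p1 p2 = fst (RtoC a * (p1, p2))%C) |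
                          change (Qd alpha (S (S m)) p1 p2 = snd (RtoC a * (p1, p2))%C)];
        [rewrite HP | rewrite HQ]; simpl; ring).
  destruct (local_blowup_solution alpha m (p1, p2) a Ha Hnorm Hlead) as [T0 [z0 [HT0 [Hode [Hbig Hdir]]]]].
  destruct (maximal_extension_maximal (cpoly alpha (S (S m))) (cpoly_locally_lipschitz alpha _) T0 z0 HT0)
    as [lo [z [Hmax Hz]]]; [intros t Ht; apply Hode; unfold in_int in Ht; lra | exact Hbig |].
  exists lo, 0, z. split; auto.
  apply (diverges_left_of_local lo T0 z z0); auto. intros t Ht. apply Hz, Ht.
Qed.

Lemma in_int_opp (lo hi : option R) (t : R) :
  in_int lo hi t -> in_int (option_map Ropp hi) (option_map Ropp lo) (- t).
Proof. destruct lo, hi; unfold in_int; simpl; intuition lra. Qed.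

Lemma in_int_of_opp (lo hi : option R) (t : R) :
  in_int (option_map Ropp hi) (option_map Ropp lo) t -> in_int lo hi (- t).
Proof. destruct lo, hi; unfold in_int; simpl; intuition lra. Qed.

Lemma solves_opp (F : C -> C) (lo hi : option R) (z : R -> C) : solves F lo hi z ->
  solves (fun w => - F w)%C (option_map Ropp hi) (option_map Ropp lo) (fun t => z (- t)).
Proof.
  intros H t Ht. apply in_int_of_opp in Ht.
  apply has_Cderive_eq with (fun t => z (- t)) (Cmult (RtoC (-1)) (F (z (- t)))); [reflexivity | ring |].
  apply has_Cderive_comp; [|now apply H].
  apply derivable_pt_lim_eq with (fun s => - id s) (- 1); [reflexivity | reflexivity |].
  apply derivable_pt_lim_opp, derivable_pt_lim_id.
Qed.

Lemma maximal_solution_opp (F : C -> C) (lo hi : option R) (z : R -> C) : maximal_solution F lo hi z ->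
  maximal_solution (fun w => - F w)%C (option_map Ropp hi) (option_map Ropp lo) (fun t => z (- t)).
Proof.
  intros [[[t0 H0] Hz] Hmax].
  split; [split; [exists (- t0); now apply in_int_opp | now apply solves_opp]|].
  intros lo' hi' w [[t1 H1] Hw] Hsub Heq t Ht.
  assert (Hw' := solves_opp (fun v => - F v)%C lo' hi' w Hw). cbv beta in Hw'.
  replace (fun w => - - F w)%C with F in Hw' by (apply functional_extensionality; intros v; ring).
  rewrite <- (Ropp_involutive t). apply in_int_opp.
  apply (Hmax (option_map Ropp hi') (option_map Ropp lo') (fun t => w (- t))).
  - split; [exists (- t1); now apply in_int_opp | exact Hw'].
  - intros s Hs. rewrite <- (Ropp_involutive s). now apply in_int_opp, Hsub, in_int_opp.
  - intros s Hs. rewrite Heq by now apply in_int_opp. now rewrite Ropp_involutive.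
  - now apply in_int_opp.
Qed.

Lemma diverges_left_of_opp (lo : option R) (tmax : R) (z : R -> C) (p : C) :
  diverges_left_of lo tmax z p -> diverges_right_of (- tmax) (option_map Ropp lo) (fun t => z (- t)) p.
Proof.
  intros [H1 H2]. split.
  - intros M. destruct (H1 M) as [d [Hd Hb]]. exists d. split; auto. intros t Ht Htd.
    apply Hb; [|lra]. exact (in_int_of_opp lo (Some tmax) t Ht).
  - intros e He. destruct (H2 e He) as [d [Hd Hb]]. exists d. split; auto. intros t Ht Htd.
    apply Hb; [|lra]. exact (in_int_of_opp lo (Some tmax) t Ht).
Qed.

Lemma cpoly_opp (alpha : nat -> C) (d : nat) (w : C) :
  cpoly (fun k => - alpha k)%C d w = (- cpoly alpha d w)%C.
Proof. induction d as [|d IH]; [reflexivity|]. rewrite !cpoly_S, IH. change Cx with C. ring. Qed.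

Lemma leading_eigenvalue_nonzero (alpha : nat -> C) (d : nat) (p1 p2 a : R) :
  alpha d <> (0, 0) -> cnorm (p1, p2) = 1 ->
  Pd alpha d p1 p2 = a * p1 -> Qd alpha d p1 p2 = a * p2 -> a <> 0.
Proof.
  intros Ha0 Hnorm HP HQ ->. apply Ha0, Cmod_eq_0.
  assert (E : (alpha d * (p1, p2) ^ d)%C = RtoC 0)
    by (apply C_pair_eq; [change (Pd alpha d p1 p2 = 0) | change (Qd alpha d p1 p2 = 0)]; lra).
  apply (f_equal Cmod) in E. rewrite Cmod_mult, Cmod_pow, Cmod_0 in E.
  change (Cmod (p1, p2)) with (cnorm (p1, p2)) in E. rewrite Hnorm, pow1, Rmult_1_r in E. exact E.
Qed.

Theorem mainTheorem3 (alpha : nat -> Cx) (d : nat) (p1 p2 a : R) :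
  (2 <= d)%nat ->
  alpha d <> (0, 0) ->
  cnorm (p1, p2) = 1 ->
  p1 * Qd alpha d p1 p2 - p2 * Pd alpha d p1 p2 = 0 ->
  Pd alpha d p1 p2 = a * p1 ->
  Qd alpha d p1 p2 = a * p2 ->
  a <> 0 /\
  (a > 0 -> exists (lo : option R) (tmax : R) (z : R -> Cx),
      maximal_solution (cpoly alpha d) lo (Some tmax) z /\
      diverges_left_of lo tmax z (p1, p2)) /\
  (a < 0 -> exists (tmin : R) (hi : option R) (z : R -> Cx),
      maximal_solution (cpoly alpha d) (Some tmin) hi z /\
      diverges_right_of tmin hi z (p1, p2)).
Proof.
  (* The critical-point equation is implied by the two eigen-equations. *)
  intros Hd Ha0 Hnorm _ HP HQ.
  split; [exact (leading_eigenvalue_nonzero alpha d p1 p2 a Ha0 Hnorm HP HQ)|].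
  split; [now apply positive_separatrix|].
  intros Ha.
  destruct (positive_separatrix (fun k => - alpha k)%C d p1 p2 (- a)) as [lo [tmax [z [Hmax Hdiv]]]]; auto;
    [unfold Pd in *; simpl in *; lra | unfold Qd in *; simpl in *; lra | lra |].
  exists (- tmax), (option_map Ropp lo), (fun t => z (- t)). split; [|now apply diverges_left_of_opp].
  apply maximal_solution_opp in Hmax.
  replace (fun w => - cpoly (fun k => - alpha k) d w)%C with (cpoly alpha d) in Hmax; [exact Hmax|].
  apply functional_extensionality. intros w. rewrite cpoly_opp. apply C_pair_eq; simpl; ring.
Qed.
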